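(* Consider the two-tubes TFE equations (defined in the context). (A) For every $v<0$ there exist exactly two (up to translation) traveling wave solutions $(c_1,c_2)(y-vt)$ with speed $v$ satisfying $(c_1,c_2)(-\infty)=(-1,-1)$; they connect $(-1,-1)$ to $(-2v-1,-6v-1)$ and $(-1,-1)$ to $(-6v-1,-2v-1)$, respectively. For $v=0$ the only stationary solution $(c_1,c_2)(y)$ satisfying $(c_1,c_2)(-\infty)=(-1,-1)$ is the constant $(c_1,c_2)\equiv(-1,-1)$. For $v>0$ there are no non-constant traveling waves with speed $v$ satisfying $(c_1,c_2)(-\infty)=(-1,-1)$. (B) For every $v>0$ there exist exactly two (up to translation) traveling wave solutions $(c_1,c_2)(y-vt)$ with speed $v$ satisfying $(c_1,c_2)(+\infty)=(1,1)$; they connect $(-2v+1,-6v+1)$ to $(1,1)$ and $(-6v+1,-2v+1)$ to $(1,1)$, respectively. For $v=0$ the only stationary solution $(c_1,c_2)(y)$ satisfying $(c_1,c_2)(+\infty)=(1,1)$ is the constant $(c_1,c_2)\equiv(1,1)$. For $v<0$ there are no non-constant traveling waves with speed $v$ satisfying $(c_1,c_2)(+\infty)=(1,1)$.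
   Context: Two-tubes TFE equations: unknowns $c_1,c_2$, real functions of $(t,y)\in[0,\infty)\times\mathbb{R}$, satisfying $$\partial_t c_1+\partial_y(u_1c_1)-\partial_{yy}c_1=-f,\qquad \partial_t c_2+\partial_y(u_2c_2)-\partial_{yy}c_2=f,$$ with $u_1=(c_2-c_1)/2$, $u_2=-u_1$, and $f=-(\partial_y u_1)\,c_1$ if $\partial_y u_1\le 0$, $f=-(\partial_y u_1)\,c_2$ if $\partial_y u_1\ge0$. A traveling wave with speed $v$ is a solution of the form $(c_1,c_2)(t,y)=\tilde g(y-vt)$ with $\tilde g:\mathbb{R}\to\mathbb{R}^2$ continuous (and smooth enough to solve the equations classically) having limits $\tilde g(\pm\infty)$; it connects $\tilde g(-\infty)$ to $\tilde g(+\infty)$. *)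

From Stdlib Require Import Reals.
From Coquelicot Require Import Coquelicot.
Open Scope R_scope.

(* Source term f, as a function of d = du1/dy and of (c1, c2):
   f = -d*c1 if d <= 0, f = -d*c2 if d >= 0 (both agree at d = 0). *)
Definition fTFE (d c1 c2 : R) : R :=
  if Rle_dec d 0 then - d * c1 else - d * c2.

Definition u1_of (g1 g2 : R -> R) : R -> R := fun z => (g2 z - g1 z) / 2.

(* (g1,g2) is the profile of a classical traveling wave with speed v:
   (c1,c2)(t,y) = (g1,g2)(y - v t) solves the two-tubes TFE equations.
   Substituting xi = y - v t, this amounts to the profile ODEs
     -v g1' + (u1 g1)' - g1'' = -f,   -v g2' + (u2 g2)' - g2'' = f,
   with u2 = -u1; profiles are twice differentiable and have finite limits
   at -oo and +oo. *)
Definition is_TW (v : R) (g1 g2 : R -> R) : Prop :=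
  (forall x, ex_derive g1 x) /\ (forall x, ex_derive g2 x) /\
  (forall x, ex_derive (Derive g1) x) /\ (forall x, ex_derive (Derive g2) x) /\
  (exists a1 a2 b1 b2 : R,
      is_lim g1 m_infty a1 /\ is_lim g2 m_infty a2 /\
      is_lim g1 p_infty b1 /\ is_lim g2 p_infty b2) /\
  (forall x,
      - v * Derive g1 x + Derive (fun z => u1_of g1 g2 z * g1 z) x
        - Derive_n g1 2 x
      = - fTFE (Derive (u1_of g1 g2) x) (g1 x) (g2 x)) /\
  (forall x,
      - v * Derive g2 x + Derive (fun z => - u1_of g1 g2 z * g2 z) x
        - Derive_n g2 2 x
      = fTFE (Derive (u1_of g1 g2) x) (g1 x) (g2 x)).

Definition lim_left (g1 g2 : R -> R) (a1 a2 : R) : Prop :=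
  is_lim g1 m_infty a1 /\ is_lim g2 m_infty a2.
Definition lim_right (g1 g2 : R -> R) (b1 b2 : R) : Prop :=
  is_lim g1 p_infty b1 /\ is_lim g2 p_infty b2.

Definition profile_const (g1 g2 : R -> R) : Prop :=
  exists a1 a2 : R, forall x, g1 x = a1 /\ g2 x = a2.

Definition profile_translate (g1 g2 h1 h2 : R -> R) : Prop :=
  exists s : R, forall x, g1 x = h1 (x + s) /\ g2 x = h2 (x + s).

(* Write u = (c2 - c1) / 2 for the velocity u1.  Along a profile with limit (-1, -1) at -oo
   the sources cancel in the sum of the two equations, which integrates to
   c1' + c2' = - v (c1 + c2 + 2) - 2 u^2, and the energy E = c1'^2 + c2'^2 satisfies
   |E' + 2 v E| <= 6 |u| E, so by Gronwall it vanishes identically (constant profile) or nowhere.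
   On a tail where E is monotone and positive, the first integral keeps |u'| away from 0, which
   contradicts the existence of a limit of u.  For v > 0 this applies near -oo, where u is small,
   so every wave is constant; for v = 0 the quantity u u' is nondecreasing and forces u = 0.
   For v < 0 the slopes p = 3 c1' - c2' and q = 3 c2' - c1' satisfy a linear system for which
   the closed quadrant {p, q >= 0} and the complement of the open quadrant are both invariant; a
   case analysis on the sign of u(+oo) leaves only p = 0 with u' > 0 or q = 0 with u' < 0, where
   c1 + 1 (resp. c2 + 1) solves a logistic equation: these are the two explicit fronts.  Part (B)
   follows from part (A) by the symmetry (y, c, v) -> (-y, -c, -v). *)

From Stdlib Require Import Reals Lra Psatz Classical.
From Coquelicot Require Import Coquelicot.
Open Scope R_scope.

(** * Calculus on the real line *)

Lemma Derive_of_is_derive (f : R -> R) (x l : R) :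
  is_derive f x l -> Derive (fun y : R => f y) x = l.
Proof. apply is_derive_unique. Qed.

Lemma ex_derive_of (f df : R -> R) (x : R) : (forall t, is_derive f t (df t)) -> ex_derive f x.
Proof. intros Hd. exists (df x). apply Hd. Qed.

Section MeanValue.
Variables (f df : R -> R).
Hypothesis f_deriv : forall x, is_derive f x (df x).

Lemma MVT_open (a b : R) : a < b -> exists c, a < c < b /\ f b - f a = df c * (b - a).
Proof.
  intros ab. destruct (MVT_cor2 f df a b ab) as [c [E Hc]].
  - intros c _. apply is_derive_Reals, f_deriv.
  - exists c. split; assumption.
Qed.

Lemma increment_ge (a b k : R) : a <= b -> (forall x, a <= x <= b -> k <= df x) ->
  k * (b - a) <= f b - f a.
Proof.
  intros [ab| <-] Hk; [|lra].
  destruct (MVT_open a b ab) as [c [Hc ->]]. specialize (Hk c ltac:(lra)). nra.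
Qed.

Lemma increment_le (a b k : R) : a <= b -> (forall x, a <= x <= b -> df x <= k) ->
  f b - f a <= k * (b - a).
Proof.
  intros [ab| <-] Hk; [|lra].
  destruct (MVT_open a b ab) as [c [Hc ->]]. specialize (Hk c ltac:(lra)). nra.
Qed.

Lemma nondecreasing_of_derive (a b : R) : a <= b -> (forall x, a <= x <= b -> 0 <= df x) ->
  f a <= f b.
Proof. intros ab Hk. pose proof (increment_ge a b 0 ab Hk). lra. Qed.

Lemma nonincreasing_of_derive (a b : R) : a <= b -> (forall x, a <= x <= b -> df x <= 0) ->
  f b <= f a.
Proof. intros ab Hk. pose proof (increment_le a b 0 ab Hk). lra. Qed.

Lemma constant_of_derive_0 : (forall x, df x = 0) -> forall x y, f x = f y.
Proof.
  intros H0.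
  assert (Hle : forall a b, a <= b -> f a = f b).
  { intros a b ab.
    pose proof (nondecreasing_of_derive a b ab (fun x _ => Req_le_sym _ _ (H0 x))).
    pose proof (nonincreasing_of_derive a b ab (fun x _ => Req_le _ _ (H0 x))). lra. }
  intros x y. destruct (Rle_dec x y); [apply Hle | symmetry; apply Hle]; lra.
Qed.

Lemma derive_ge_no_limit_p (a y k : R) : is_lim f p_infty a -> 0 < k ->
  (forall x, y <= x -> k <= df x) -> False.
Proof.
  intros Hf Hk Hd. apply is_lim_spec in Hf. cbn in Hf.
  destruct (Hf (mkposreal 1 Rlt_0_1)) as [M HM]. simpl in HM.
  set (x1 := Rmax y M + 1). set (x2 := x1 + 2 / k).
  assert (Hx1 : y <= x1 /\ M < x1)
    by (unfold x1; split; [pose proof (Rmax_l y M) | pose proof (Rmax_r y M)]; lra).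
  assert (Hk2 : k * (x2 - x1) = 2) by (unfold x2; field; lra).
  assert (x1 < x2) by (unfold x2; pose proof (Rdiv_lt_0_compat 2 k Rlt_0_2 Hk); lra).
  assert (k * (x2 - x1) <= f x2 - f x1) by (apply increment_ge; [| intros; apply Hd]; lra).
  pose proof (Rabs_def2 _ _ (HM x1 ltac:(lra))).
  pose proof (Rabs_def2 _ _ (HM x2 ltac:(lra))). lra.
Qed.

Lemma derive_ge_no_limit_m (a y k : R) : is_lim f m_infty a -> 0 < k ->
  (forall x, x <= y -> k <= df x) -> False.
Proof.
  intros Hf Hk Hd. apply is_lim_spec in Hf. cbn in Hf.
  destruct (Hf (mkposreal 1 Rlt_0_1)) as [M HM]. simpl in HM.
  set (x1 := Rmin y M - 1). set (x2 := x1 - 2 / k).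
  assert (Hx1 : x1 <= y /\ x1 < M)
    by (unfold x1; split; [pose proof (Rmin_l y M) | pose proof (Rmin_r y M)]; lra).
  assert (Hk2 : k * (x1 - x2) = 2) by (unfold x2; field; lra).
  assert (x2 < x1) by (unfold x2; pose proof (Rdiv_lt_0_compat 2 k Rlt_0_2 Hk); lra).
  assert (k * (x1 - x2) <= f x1 - f x2) by (apply increment_ge; [| intros; apply Hd]; lra).
  pose proof (Rabs_def2 _ _ (HM x1 ltac:(lra))).
  pose proof (Rabs_def2 _ _ (HM x2 ltac:(lra))). lra.
Qed.

End MeanValue.

Lemma derive_le_no_limit_p (f df : R -> R) (Hd : forall x, is_derive f x (df x)) (a y k : R) :
  is_lim f p_infty a -> 0 < k -> (forall x, y <= x -> df x <= - k) -> False.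
Proof.
  intros Hf Hk Hle.
  apply (derive_ge_no_limit_p (fun x => - f x) (fun x => - df x)
           (fun x => is_derive_opp _ _ _ (Hd x)) (- a) y k (is_lim_opp _ _ _ Hf) Hk).
  intros x Hx. specialize (Hle x Hx). lra.
Qed.

Lemma derive_le_no_limit_m (f df : R -> R) (Hd : forall x, is_derive f x (df x)) (a y k : R) :
  is_lim f m_infty a -> 0 < k -> (forall x, x <= y -> df x <= - k) -> False.
Proof.
  intros Hf Hk Hle.
  apply (derive_ge_no_limit_m (fun x => - f x) (fun x => - df x)
           (fun x => is_derive_opp _ _ _ (Hd x)) (- a) y k (is_lim_opp _ _ _ Hf) Hk).
  intros x Hx. specialize (Hle x Hx). lra.
Qed.

Lemma limit_of_derive_p (f df : R -> R) (a l : R) : (forall x, is_derive f x (df x)) ->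
  is_lim f p_infty a -> is_lim df p_infty l -> l = 0.
Proof.
  intros Hd Hf Hl. destruct (Req_dec l 0) as [|Hl0]; [assumption|exfalso].
  assert (Hk : 0 < Rabs l / 2) by (pose proof (Rabs_pos_lt _ Hl0); lra).
  apply is_lim_spec in Hl. cbn in Hl. destruct (Hl (mkposreal _ Hk)) as [M HM]. simpl in HM.
  destruct (Rle_lt_dec l 0).
  - apply (derive_le_no_limit_p f df Hd a (M + 1) (Rabs l / 2) Hf Hk).
    intros x Hx. specialize (HM x ltac:(lra)). rewrite (Rabs_left1 l) in * by lra.
    apply Rabs_def2 in HM. lra.
  - apply (derive_ge_no_limit_p f df Hd a (M + 1) (Rabs l / 2) Hf Hk).
    intros x Hx. specialize (HM x ltac:(lra)). rewrite (Rabs_right l) in * by lra.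
    apply Rabs_def2 in HM. lra.
Qed.

Lemma limit_of_derive_m (f df : R -> R) (a l : R) : (forall x, is_derive f x (df x)) ->
  is_lim f m_infty a -> is_lim df m_infty l -> l = 0.
Proof.
  intros Hd Hf Hl. destruct (Req_dec l 0) as [|Hl0]; [assumption|exfalso].
  assert (Hk : 0 < Rabs l / 2) by (pose proof (Rabs_pos_lt _ Hl0); lra).
  apply is_lim_spec in Hl. cbn in Hl. destruct (Hl (mkposreal _ Hk)) as [M HM]. simpl in HM.
  destruct (Rle_lt_dec l 0).
  - apply (derive_le_no_limit_m f df Hd a (M - 1) (Rabs l / 2) Hf Hk).
    intros x Hx. specialize (HM x ltac:(lra)). rewrite (Rabs_left1 l) in * by lra.
    apply Rabs_def2 in HM. lra.
  - apply (derive_ge_no_limit_m f df Hd a (M - 1) (Rabs l / 2) Hf Hk).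
    intros x Hx. specialize (HM x ltac:(lra)). rewrite (Rabs_right l) in * by lra.
    apply Rabs_def2 in HM. lra.
Qed.

Lemma continuity_of_derive (f df : R -> R) : (forall x, is_derive f x (df x)) -> continuity f.
Proof.
  intros Hd x. apply continuity_pt_filterlim, (ex_derive_continuous f x). exists (df x). apply Hd.
Qed.

Lemma sign_constant (g : R -> R) (x y : R) : continuity g -> x <= y ->
  (forall t, x <= t <= y -> g t <> 0) -> 0 < g x * g y.
Proof.
  intros Hc xy Hnz. destruct (Rlt_le_dec 0 (g x * g y)) as [|Hle]; [assumption|exfalso].
  destruct (IVT_cor g x y Hc xy Hle) as [t [Ht Hg]]. exact (Hnz t Ht Hg).
Qed.

Lemma derive_away_from_0_no_limit_p (f df : R -> R) (a X k : R) :
  (forall x, is_derive f x (df x)) -> continuity df -> is_lim f p_infty a -> 0 < k ->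
  (forall x, X <= x -> k <= Rabs (df x)) -> False.
Proof.
  intros Hd Hc Hf Hk Habs.
  assert (Hsign : forall x, X <= x -> 0 < df X * df x).
  { intros x Hx. apply sign_constant; [assumption..|].
    intros t Ht H0. specialize (Habs t (proj1 Ht)). rewrite H0, Rabs_R0 in Habs. lra. }
  destruct (Rlt_le_dec 0 (df X)) as [Hpos|Hneg].
  - apply (derive_ge_no_limit_p f df Hd a X k Hf Hk). intros x Hx.
    specialize (Habs x Hx). specialize (Hsign x Hx).
    rewrite Rabs_right in Habs by nra. assumption.
  - apply (derive_le_no_limit_p f df Hd a X k Hf Hk). intros x Hx.
    specialize (Habs x Hx). specialize (Hsign x Hx).
    rewrite Rabs_left in Habs by nra. lra.
Qed.

Lemma derive_away_from_0_no_limit_m (f df : R -> R) (a X k : R) :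
  (forall x, is_derive f x (df x)) -> continuity df -> is_lim f m_infty a -> 0 < k ->
  (forall x, x <= X -> k <= Rabs (df x)) -> False.
Proof.
  intros Hd Hc Hf Hk Habs.
  assert (Hsign : forall x, x <= X -> 0 < df x * df X).
  { intros x Hx. apply sign_constant; [assumption..|].
    intros t Ht H0. specialize (Habs t (proj2 Ht)). rewrite H0, Rabs_R0 in Habs. lra. }
  destruct (Rlt_le_dec 0 (df X)) as [Hpos|Hneg].
  - apply (derive_ge_no_limit_m f df Hd a X k Hf Hk). intros x Hx.
    specialize (Habs x Hx). specialize (Hsign x Hx).
    rewrite Rabs_right in Habs by nra. assumption.
  - apply (derive_le_no_limit_m f df Hd a X k Hf Hk). intros x Hx.
    specialize (Habs x Hx). specialize (Hsign x Hx).
    rewrite Rabs_left in Habs by nra. lra.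
Qed.

Section Gronwall.
Variables (phi dphi : R -> R) (K : R).
Hypothesis phi_deriv : forall x, is_derive phi x (dphi x).
Hypothesis phi_nonneg : forall x, 0 <= phi x.

Let weighted_deriv (c x : R) :
  is_derive (fun s => phi s * exp (c * s)) x ((dphi x + c * phi x) * exp (c * x)).
Proof.
  auto_derive; [exists (dphi x); apply phi_deriv|].
  rewrite (Derive_of_is_derive phi _ _ (phi_deriv x)). ring.
Qed.

Lemma gronwall_forward (y : R) : (forall x, y <= x -> dphi x <= K * phi x) -> phi y = 0 ->
  forall x, y <= x -> phi x = 0.
Proof.
  intros HK H0 x yx.
  assert (Hle : phi x * exp (- K * x) <= phi y * exp (- K * y)).
  { apply (nonincreasing_of_derive _ _ (weighted_deriv (- K))); [assumption|].
    intros s Hs. specialize (HK s (proj1 Hs)). pose proof (exp_pos (- K * s)). nra. }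
  rewrite H0 in Hle. pose proof (exp_pos (- K * x)). specialize (phi_nonneg x). nra.
Qed.

Lemma gronwall_backward (y : R) : (forall x, x <= y -> - K * phi x <= dphi x) -> phi y = 0 ->
  forall x, x <= y -> phi x = 0.
Proof.
  intros HK H0 x xy.
  assert (Hle : phi x * exp (K * x) <= phi y * exp (K * y)).
  { apply (nondecreasing_of_derive _ _ (weighted_deriv K)); [assumption|].
    intros s Hs. specialize (HK s (proj2 Hs)). pose proof (exp_pos (K * s)). nra. }
  rewrite H0 in Hle. pose proof (exp_pos (K * x)). specialize (phi_nonneg x). nra.
Qed.

Lemma gronwall (y : R) : (forall x, Rabs (dphi x) <= K * phi x) -> phi y = 0 -> forall x, phi x = 0.
Proof.
  intros HK H0 x. destruct (Rle_dec y x).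
  - apply (gronwall_forward y); [|assumption..].
    intros s _. specialize (HK s). apply Rabs_le_between in HK. lra.
  - apply (gronwall_backward y); [|assumption|lra].
    intros s _. specialize (HK s). apply Rabs_le_between in HK. lra.
Qed.

End Gronwall.

Lemma bounded_of_limits (f : R -> R) (a b : R) : continuity f ->
  is_lim f m_infty a -> is_lim f p_infty b -> exists B, forall x, Rabs (f x) <= B.
Proof.
  intros Hc Ha Hb. apply is_lim_spec in Ha, Hb. cbn in Ha, Hb.
  destruct (Ha (mkposreal 1 Rlt_0_1)) as [M1 HM1]. destruct (Hb (mkposreal 1 Rlt_0_1)) as [M2 HM2].
  simpl in HM1, HM2. set (M3 := Rmax M1 M2).
  assert (HM13 : M1 <= M3) by apply Rmax_l.
  destruct (continuity_ab_maj f M1 M3 HM13 (fun c _ => Hc c)) as [xM [HxM _]].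
  destruct (continuity_ab_min f M1 M3 HM13 (fun c _ => Hc c)) as [xm [Hxm _]].
  exists (Rabs a + Rabs b + Rabs (f xM) + Rabs (f xm) + 1). intros x.
  pose proof (Rabs_pos a). pose proof (Rabs_pos b).
  pose proof (Rabs_pos (f xM)). pose proof (Rabs_pos (f xm)).
  destruct (Rlt_le_dec x M1) as [Hx1|Hx1]; [|destruct (Rlt_le_dec M2 x) as [Hx2|Hx2]].
  - pose proof (Rabs_triang_inv (f x) a). specialize (HM1 x Hx1). lra.
  - pose proof (Rabs_triang_inv (f x) b). specialize (HM2 x Hx2). lra.
  - assert (HI : M1 <= x <= M3) by (unfold M3; pose proof (Rmax_r M1 M2); lra).
    specialize (HxM x HI). specialize (Hxm x HI).
    pose proof (Rle_abs (f xM)). pose proof (Rle_abs (- f xm)). rewrite Rabs_Ropp in *.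
    apply Rabs_le. lra.
Qed.

Lemma derive_0_at_max (f : R -> R) (xi l : R) : is_derive f xi l -> (forall x, f x <= f xi) ->
  l = 0.
Proof.
  intros Hd Hmax. apply is_derive_Reals in Hd.
  exact (deriv_maximum f (xi - 1) (xi + 1) xi (exist _ l Hd) ltac:(lra) ltac:(lra)
           (fun x _ _ => Hmax x)).
Qed.

Lemma second_derive_at_max (f df ddf : R -> R) (xi : R) : (forall x, is_derive f x (df x)) ->
  (forall x, is_derive df x (ddf x)) -> (forall x, f x <= f xi) -> ddf xi <= 0.
Proof.
  intros Hf Hdf Hmax. apply Rnot_lt_le. intros Hpos.
  assert (H0 : df xi = 0) by exact (derive_0_at_max f xi _ (Hf xi) Hmax).
  pose proof (proj1 (is_derive_Reals _ _ _) (Hdf xi) (ddf xi / 2) ltac:(lra)) as [[d Hd] Hq].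
  simpl in Hq.
  assert (Hright : forall h, 0 < h < d -> 0 < df (xi + h)).
  { intros h Hh. specialize (Hq h ltac:(lra) ltac:(rewrite Rabs_right; lra)).
    rewrite H0, Rminus_0_r in Hq. apply Rabs_def2 in Hq.
    assert (Hquot : 0 < df (xi + h) / h) by lra.
    apply Rdiv_pos_cases in Hquot. lra. }
  destruct (MVT_open f df Hf xi (xi + d / 2) ltac:(lra)) as [c [Hc E]].
  specialize (Hright (c - xi) ltac:(lra)). replace (xi + (c - xi)) with c in Hright by ring.
  specialize (Hmax (xi + d / 2)). nra.
Qed.

Lemma exists_global_max (u : R -> R) (x1 : R) : continuity u -> is_lim u m_infty 0 ->
  0 < u x1 -> (forall x, x1 <= x -> u x <= u x1) -> exists xi, forall x, u x <= u xi.
Proof.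
  intros Hc Hl Hp Hright. apply is_lim_spec in Hl. cbn in Hl.
  destruct (Hl (mkposreal _ Hp)) as [M HM]. simpl in HM.
  set (L := Rmin M x1). assert (HL : L <= x1) by apply Rmin_r.
  destruct (continuity_ab_maj u L x1 HL (fun c _ => Hc c)) as [xi [Hxi _]].
  exists xi. intros x. assert (u x1 <= u xi) by (apply Hxi; lra).
  destruct (Rlt_le_dec x L) as [HxL|HxL]; [|destruct (Rle_dec x x1)].
  - assert (HxM : x < M) by (pose proof (Rmin_l M x1); unfold L in *; lra).
    specialize (HM x HxM). rewrite Rminus_0_r in HM. apply Rabs_def2 in HM. lra.
  - apply Hxi. lra.
  - specialize (Hright x ltac:(lra)). lra.
Qed.

Lemma is_derive_of_quadratic_error (f : R -> R) (t l : R) :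
  (forall h, Rabs (f (t + h) - f t - l * h) <= h * h) -> is_derive f t l.
Proof.
  intros H. apply is_derive_Reals. intros eps Heps. exists (mkposreal eps Heps).
  intros h Hh0 Hh. simpl in Hh.
  replace ((f (t + h) - f t) / h - l) with ((f (t + h) - f t - l * h) / h) by (field; assumption).
  unfold Rdiv. rewrite Rabs_mult, Rabs_inv. specialize (H h).
  assert (0 < Rabs h) by (apply Rabs_pos_lt; assumption).
  apply (Rmult_lt_reg_r (Rabs h)); [assumption|].
  rewrite Rmult_assoc, Rinv_l, Rmult_1_r by lra.
  assert (h * h = Rabs h * Rabs h) by (rewrite <- Rabs_mult, Rabs_right; nra). nra.
Qed.

Lemma is_derive_pos_part_sqr (p : R -> R) (x dp : R) : is_derive p x dp ->
  is_derive (fun t => Rmax (p t) 0 * Rmax (p t) 0) x (2 * Rmax (p x) 0 * dp).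
Proof.
  intros Hp.
  assert (Hsq : forall s, is_derive (fun r => Rmax r 0 * Rmax r 0) s (2 * Rmax s 0)).
  { intros s. apply is_derive_of_quadratic_error. intros h. apply Rabs_le.
    destruct (Rle_dec s 0), (Rle_dec (s + h) 0);
      rewrite ?(Rmax_right s), ?(Rmax_left s), ?(Rmax_right (s + h)), ?(Rmax_left (s + h)) by lra;
      split; nra. }
  pose proof (is_derive_comp _ p x _ _ (Hsq (p x)) Hp) as H. simpl in H.
  unfold scal in H; simpl in H; unfold mult in H; simpl in H.
  replace (2 * Rmax (p x) 0 * dp) with (dp * (2 * Rmax (p x) 0)) by ring. exact H.
Qed.

Lemma Rmin_0_opp (a : R) : Rmin a 0 = - Rmax (- a) 0.
Proof. unfold Rmin, Rmax. destruct (Rle_dec a 0), (Rle_dec (- a) 0); lra. Qed.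

Lemma Rmax_0_sub (a : R) : Rmax a 0 = a - Rmin a 0.
Proof. unfold Rmax, Rmin. destruct (Rle_dec a 0); lra. Qed.

Lemma Rabs_Rmax_Rmin (a : R) : Rabs a = Rmax a 0 - Rmin a 0.
Proof.
  unfold Rmax, Rmin. destruct (Rle_dec a 0); [rewrite Rabs_left1 | rewrite Rabs_right]; lra.
Qed.

Lemma Rmin_1_sqr_le_Rabs (y : R) : Rmin 1 (y * y) <= Rabs y.
Proof.
  destruct (Rle_dec 1 (Rabs y)).
  - pose proof (Rmin_l 1 (y * y)). lra.
  - pose proof (Rmin_r 1 (y * y)). pose proof (Rabs_pos y).
    assert (y * y = Rabs y * Rabs y) by (rewrite <- Rabs_mult; symmetry; apply Rabs_right; nra).
    nra.
Qed.

Lemma is_derive_neg_part_sqr (p : R -> R) (x dp : R) : is_derive p x dp ->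
  is_derive (fun t => Rmin (p t) 0 * Rmin (p t) 0) x (2 * Rmin (p x) 0 * dp).
Proof.
  intros Hp.
  pose proof (is_derive_pos_part_sqr (fun t => - p t) x (- dp) (is_derive_opp _ _ _ Hp)) as H.
  rewrite Rmin_0_opp. replace (2 * - Rmax (- p x) 0 * dp) with (2 * Rmax (- p x) 0 * - dp) by ring.
  assert (E : forall t, Rmax (- p t) 0 * Rmax (- p t) 0 = Rmin (p t) 0 * Rmin (p t) 0)
    by (intros t; rewrite Rmin_0_opp; ring).
  exact (is_derive_ext _ _ _ _ E H).
Qed.

Lemma is_lim_affine (f g : R -> R) (x : Rbar) (a b c d e : R) :
  is_lim f x a -> is_lim g x b -> is_lim (fun y => c * f y + d * g y + e) x (c * a + d * b + e).
Proof.
  intros Hf Hg.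
  apply is_lim_plus'; [apply is_lim_plus'|apply is_lim_const].
  - exact (is_lim_scal_l f c x a Hf).
  - exact (is_lim_scal_l g d x b Hg).
Qed.

Lemma is_lim_affine_eq (f g h : R -> R) (x : Rbar) (a b c d e l : R) :
  is_lim f x a -> is_lim g x b -> (forall y, h y = c * f y + d * g y + e) ->
  l = c * a + d * b + e -> is_lim h x l.
Proof.
  intros Hf Hg Eh ->. apply (is_lim_ext (fun y => c * f y + d * g y + e)).
  - intros y; symmetry; apply Eh.
  - apply is_lim_affine; assumption.
Qed.

Lemma is_lim_sqr (f : R -> R) (x : Rbar) (a : R) :
  is_lim f x a -> is_lim (fun y => f y * f y) x (a * a).
Proof. intros Hf. exact (is_lim_mult f f x a a Hf Hf I). Qed.

Lemma is_lim_reflect_p (f : R -> R) (a : R) :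
  is_lim f m_infty a -> is_lim (fun x => - f (- x)) p_infty (- a).
Proof.
  intros Hf. refine (is_lim_opp (fun x => f (- x)) p_infty a _).
  apply (is_lim_ext (fun x => f (-1 * x + 0))); [intros x; f_equal; ring|].
  apply is_lim_comp_lin; [|lra].
  simpl. destruct (Rle_dec 0 (-1)); [exfalso; lra|exact Hf].
Qed.

Lemma is_lim_reflect_m (f : R -> R) (a : R) :
  is_lim f p_infty a -> is_lim (fun x => - f (- x)) m_infty (- a).
Proof.
  intros Hf. refine (is_lim_opp (fun x => f (- x)) m_infty a _).
  apply (is_lim_ext (fun x => f (-1 * x + 0))); [intros x; f_equal; ring|].
  apply is_lim_comp_lin; [|lra].
  simpl. destruct (Rle_dec 0 (-1)); [exfalso; lra|exact Hf].
Qed.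

Lemma constant_limit_eq (f : R -> R) (x : Rbar) (c l : R) : (forall y, f y = c) -> is_lim f x l ->
  c = l.
Proof.
  intros Hc Hf. apply (is_lim_ext _ (fun _ => c)) in Hf; [|assumption].
  pose proof (is_lim_unique _ _ _ Hf) as H1. rewrite Lim_const in H1. injection H1. easy.
Qed.

(** * The profile equations *)

(* The equations of [is_TW] with the fluxes and the source [fTFE] differentiated out.  The
   derivatives are explicit arguments, so that the system is visibly stable under exchanging
   the two tubes and under the reflection (y, c, v) -> (-y, -c, -v). *)
Record profile_ode (v : R) (g1 g2 g1' g2' g1'' g2'' : R -> R) : Prop := {
  ode_deriv1 : forall x, is_derive g1 x (g1' x);
  ode_deriv2 : forall x, is_derive g2 x (g2' x);
  ode_deriv1' : forall x, is_derive g1' x (g1'' x);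
  ode_deriv2' : forall x, is_derive g2' x (g2'' x);
  ode_eq1 : forall x, g1'' x =
    (u1_of g1 g2 x - v) * g1' x - 2 * u1_of g1 g2 x * Rmax (u1_of g1' g2' x) 0;
  ode_eq2 : forall x, g2'' x =
    - (u1_of g1 g2 x + v) * g2' x - 2 * u1_of g1 g2 x * Rmin (u1_of g1' g2' x) 0 }.

Lemma fTFE_Rmax (d c1 c2 : R) : fTFE d c1 c2 = - d * c1 - Rmax d 0 * (c2 - c1).
Proof.
  unfold fTFE. destruct (Rle_dec d 0).
  - rewrite Rmax_right by lra. ring.
  - rewrite Rmax_left by lra. ring.
Qed.

Lemma fTFE_Rmin (d c1 c2 : R) : fTFE d c1 c2 = - d * c2 + Rmin d 0 * (c2 - c1).
Proof.
  unfold fTFE. destruct (Rle_dec d 0).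
  - rewrite Rmin_left by lra. ring.
  - rewrite Rmin_right by lra. ring.
Qed.

Section TravelingWaveEquations.
Variables (v : R) (g1 g2 g1' g2' : R -> R).
Hypothesis deriv1 : forall x, is_derive g1 x (g1' x).
Hypothesis deriv2 : forall x, is_derive g2 x (g2' x).

Lemma is_derive_u1_of (x : R) : is_derive (u1_of g1 g2) x (u1_of g1' g2' x).
Proof.
  unfold u1_of. auto_derive; [split; [exists (g2' x)|split; [exists (g1' x)|]]; auto|].
  rewrite (Derive_of_is_derive g1 _ _ (deriv1 x)), (Derive_of_is_derive g2 _ _ (deriv2 x)).
  field.
Qed.

Lemma TW_eq1_iff (x a : R) :
  - v * Derive g1 x + Derive (fun z => u1_of g1 g2 z * g1 z) x - a
    = - fTFE (Derive (u1_of g1 g2) x) (g1 x) (g2 x) <->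
  a = (u1_of g1 g2 x - v) * g1' x - 2 * u1_of g1 g2 x * Rmax (u1_of g1' g2' x) 0.
Proof.
  rewrite (is_derive_unique _ _ _ (is_derive_u1_of x)), fTFE_Rmax,
    (is_derive_unique _ _ _ (deriv1 x)),
    (is_derive_unique (fun z : R => u1_of g1 g2 z * g1 z) x _
       (is_derive_mult _ _ x _ _ (is_derive_u1_of x) (deriv1 x) Rmult_comm)).
  unfold u1_of, plus, mult; simpl. split; intros; lra.
Qed.

Lemma TW_eq2_iff (x a : R) :
  - v * Derive g2 x + Derive (fun z => - u1_of g1 g2 z * g2 z) x - a
    = fTFE (Derive (u1_of g1 g2) x) (g1 x) (g2 x) <->
  a = - (u1_of g1 g2 x + v) * g2' x - 2 * u1_of g1 g2 x * Rmin (u1_of g1' g2' x) 0.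
Proof.
  rewrite (is_derive_unique _ _ _ (is_derive_u1_of x)), fTFE_Rmin,
    (is_derive_unique _ _ _ (deriv2 x)),
    (is_derive_unique (fun z : R => - u1_of g1 g2 z * g2 z) x _
       (is_derive_mult _ _ x _ _ (is_derive_opp _ _ _ (is_derive_u1_of x))
       (deriv2 x) Rmult_comm)).
  unfold u1_of, plus, mult, opp; simpl. split; intros; lra.
Qed.

End TravelingWaveEquations.

Lemma profile_ode_of_TW (v : R) (g1 g2 : R -> R) : is_TW v g1 g2 ->
  profile_ode v g1 g2 (Derive g1) (Derive g2) (Derive (Derive g1)) (Derive (Derive g2)).
Proof.
  intros [ex1 [ex2 [ex1' [ex2' [_ [E1 E2]]]]]].
  assert (d1 : forall x, is_derive g1 x (Derive g1 x)) by (intros; apply Derive_correct, ex1).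
  assert (d2 : forall x, is_derive g2 x (Derive g2 x)) by (intros; apply Derive_correct, ex2).
  split; [assumption | assumption | intros; apply Derive_correct, ex1'
         | intros; apply Derive_correct, ex2' | intros x | intros x].
  - apply (TW_eq1_iff v g1 g2 _ _ d1 d2), E1.
  - apply (TW_eq2_iff v g1 g2 _ _ d1 d2), E2.
Qed.

Lemma TW_of_profile_ode (v : R) (g1 g2 g1' g2' g1'' g2'' : R -> R) (a1 a2 b1 b2 : R) :
  profile_ode v g1 g2 g1' g2' g1'' g2'' -> lim_left g1 g2 a1 a2 -> lim_right g1 g2 b1 b2 ->
  is_TW v g1 g2.
Proof.
  intros [d1 d2 d1' d2' E1 E2] [L1 L2] [R1 R2].
  assert (Q1 : forall x, Derive g1 x = g1' x) by (intros; apply is_derive_unique, d1).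
  assert (Q2 : forall x, Derive g2 x = g2' x) by (intros; apply is_derive_unique, d2).
  assert (QQ1 : forall x, Derive_n g1 2 x = g1'' x).
  { intros x. change (Derive (Derive g1) x = g1'' x).
    rewrite (Derive_ext _ _ x Q1). apply is_derive_unique, d1'. }
  assert (QQ2 : forall x, Derive_n g2 2 x = g2'' x).
  { intros x. change (Derive (Derive g2) x = g2'' x).
    rewrite (Derive_ext _ _ x Q2). apply is_derive_unique, d2'. }
  split; [intros x; exists (g1' x); apply d1|].
  split; [intros x; exists (g2' x); apply d2|].
  split; [intros x; apply (ex_derive_ext g1');
            [intros; symmetry; apply Q1 | exists (g1'' x); apply d1']|].
  split; [intros x; apply (ex_derive_ext g2');
            [intros; symmetry; apply Q2 | exists (g2'' x); apply d2']|].
  split; [exists a1, a2, b1, b2; auto|].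
  split; intros x.
  - apply (TW_eq1_iff v g1 g2 _ _ d1 d2). rewrite QQ1. apply E1.
  - apply (TW_eq2_iff v g1 g2 _ _ d1 d2). rewrite QQ2. apply E2.
Qed.

Lemma u1_of_swap (f1 f2 : R -> R) (x : R) : u1_of f2 f1 x = - u1_of f1 f2 x.
Proof. unfold u1_of. field. Qed.

Lemma profile_ode_swap (v : R) (g1 g2 g1' g2' g1'' g2'' : R -> R) :
  profile_ode v g1 g2 g1' g2' g1'' g2'' -> profile_ode v g2 g1 g2' g1' g2'' g1''.
Proof.
  intros [d1 d2 d1' d2' E1 E2].
  split; [assumption.. | intros x; rewrite E2 | intros x; rewrite E1];
    rewrite (u1_of_swap g1 g2), (u1_of_swap g1' g2').
  - rewrite Rmin_0_opp. ring.
  - rewrite Rmin_0_opp, Ropp_involutive. ring.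
Qed.

Lemma lim_left_swap (g1 g2 : R -> R) (a1 a2 : R) :
  lim_left g1 g2 a1 a2 -> lim_left g2 g1 a2 a1.
Proof. intros [L1 L2]. split; assumption. Qed.

Lemma lim_right_swap (g1 g2 : R -> R) (b1 b2 : R) :
  lim_right g1 g2 b1 b2 -> lim_right g2 g1 b2 b1.
Proof. intros [L1 L2]. split; assumption. Qed.

Lemma lim_left_reflect (g1 g2 : R -> R) (b1 b2 a1 a2 : R) : lim_right g1 g2 b1 b2 ->
  a1 = - b1 -> a2 = - b2 -> lim_left (fun x => - g1 (- x)) (fun x => - g2 (- x)) a1 a2.
Proof. intros [L1 L2] -> ->. split; apply is_lim_reflect_m; assumption. Qed.

Lemma lim_right_reflect (g1 g2 : R -> R) (a1 a2 b1 b2 : R) : lim_left g1 g2 a1 a2 ->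
  b1 = - a1 -> b2 = - a2 -> lim_right (fun x => - g1 (- x)) (fun x => - g2 (- x)) b1 b2.
Proof. intros [L1 L2] -> ->. split; apply is_lim_reflect_p; assumption. Qed.

Lemma is_derive_reflect_even (f df : R -> R) (x : R) : (forall t, is_derive f t (df t)) ->
  is_derive (fun t => f (- t)) x (- df (- x)).
Proof.
  intros Hd. pose proof (is_derive_comp f Ropp x _ (-1) (Hd (- x))) as H.
  replace (- df (- x)) with (-1 * df (- x)) by ring. apply H.
  auto_derive; [exact I|ring].
Qed.

Lemma is_derive_reflect_odd (f df : R -> R) (x : R) : (forall t, is_derive f t (df t)) ->
  is_derive (fun t => - f (- t)) x (df (- x)).
Proof.
  intros Hd. rewrite <- (Ropp_involutive (df (- x))).
  exact (is_derive_opp _ _ _ (is_derive_reflect_even f df x Hd)).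
Qed.

Lemma profile_ode_reflect (v : R) (g1 g2 g1' g2' g1'' g2'' : R -> R) :
  profile_ode v g1 g2 g1' g2' g1'' g2'' ->
  profile_ode (- v) (fun x => - g1 (- x)) (fun x => - g2 (- x))
    (fun x => g1' (- x)) (fun x => g2' (- x)) (fun x => - g1'' (- x)) (fun x => - g2'' (- x)).
Proof.
  intros [d1 d2 d1' d2' E1 E2].
  split; intros x;
    try (apply is_derive_reflect_odd; assumption); try (apply is_derive_reflect_even; assumption).
  - rewrite E1. unfold u1_of. lra.
  - rewrite E2. unfold u1_of. lra.
Qed.

(* [tilt g1 g2] is constant (equal to -2) along the front [(front1 v, front2 v)] below. *)
Definition tilt (f1 f2 : R -> R) (x : R) : R := 3 * f1 x - f2 x.

Section ProfileIdentities.
Variables (v : R) (g1 g2 g1' g2' g1'' g2'' : R -> R).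
Hypothesis ode : profile_ode v g1 g2 g1' g2' g1'' g2''.

Let d1 := ode_deriv1 _ _ _ _ _ _ _ ode.
Let d2 := ode_deriv2 _ _ _ _ _ _ _ ode.
Let d1' := ode_deriv1' _ _ _ _ _ _ _ ode.
Let d2' := ode_deriv2' _ _ _ _ _ _ _ ode.
Let eq1 := ode_eq1 _ _ _ _ _ _ _ ode.
Let eq2 := ode_eq2 _ _ _ _ _ _ _ ode.

Local Notation u := (u1_of g1 g2).
Local Notation u' := (u1_of g1' g2').
Local Notation u'' := (u1_of g1'' g2'').

Local Ltac profile_derive :=
  auto_derive;
  [ repeat split; eapply ex_derive_of; eassumption
  | rewrite ?(Derive_of_is_derive g1 _ _ (d1 _)), ?(Derive_of_is_derive g2 _ _ (d2 _)),
      ?(Derive_of_is_derive g1' _ _ (d1' _)), ?(Derive_of_is_derive g2' _ _ (d2' _)) ].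

Lemma is_derive_u (x : R) : is_derive u x (u' x).
Proof. exact (is_derive_u1_of g1 g2 g1' g2' d1 d2 x). Qed.

Lemma is_derive_u' (x : R) : is_derive u' x (u'' x).
Proof. exact (is_derive_u1_of g1' g2' g1'' g2'' d1' d2' x). Qed.

Lemma is_derive_sum (x : R) : is_derive (fun t => g1 t + g2 t) x (g1' x + g2' x).
Proof. profile_derive. ring. Qed.

Lemma is_derive_tilt (x : R) : is_derive (tilt g1 g2) x (tilt g1' g2' x).
Proof. unfold tilt. profile_derive. ring. Qed.

Lemma is_derive_tilt' (x : R) : is_derive (tilt g1' g2') x (tilt g1'' g2'' x).
Proof. unfold tilt. profile_derive. ring. Qed.

Lemma u''_eq (x : R) : u'' x = - v * u' x - u x * (g1' x + g2' x) / 2 + u x * Rabs (u' x).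
Proof. unfold u1_of at 1. rewrite eq1, eq2, Rabs_Rmax_Rmin. unfold u1_of. field. Qed.

Lemma tilt''_eq (x : R) :
  tilt g1'' g2'' x = (2 * u x - v) * tilt g1' g2' x + 8 * u x * Rmin (u' x) 0.
Proof. unfold tilt. rewrite eq1, eq2, Rmax_0_sub. unfold u1_of. field. Qed.

(* The source terms cancel in the sum of the two equations. *)
Lemma first_integral_constant (x : R) :
  g1' x + g2' x + v * (g1 x + g2 x) + 2 * (u x * u x)
  = g1' 0 + g2' 0 + v * (g1 0 + g2 0) + 2 * (u 0 * u 0).
Proof.
  apply (constant_of_derive_0
    (fun t => g1' t + g2' t + v * (g1 t + g2 t) + 2 * (u t * u t)) (fun _ => 0));
    [intros t|reflexivity].
  unfold u1_of. profile_derive. rewrite eq1, eq2, Rmax_0_sub. unfold u1_of. field.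
Qed.

Definition energy (x : R) : R := g1' x * g1' x + g2' x * g2' x.
Definition energy' (x : R) : R := 2 * g1' x * g1'' x + 2 * g2' x * g2'' x.

Lemma is_derive_energy (x : R) : is_derive energy x (energy' x).
Proof. unfold energy, energy'. profile_derive. ring. Qed.

Lemma energy_nonneg (x : R) : 0 <= energy x.
Proof. unfold energy. nra. Qed.

Lemma energy_estimate (x : R) : Rabs (energy' x + 2 * v * energy x) <= 6 * Rabs (u x) * energy x.
Proof.
  unfold energy', energy. rewrite eq1, eq2, Rmax_0_sub.
  set (a := g1' x). set (b := g2' x). set (w := u x).
  assert (E : exists y, 2 * a * ((w - v) * a - 2 * w * (u' x - Rmin (u' x) 0))
     + 2 * b * (- (w + v) * b - 2 * w * Rmin (u' x) 0) + 2 * v * (a * a + b * b) = 2 * w * y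
     /\ Rabs y <= 3 * (a * a + b * b)).
  { unfold u1_of; fold a b. destruct (Rle_dec ((b - a) / 2) 0).
    - rewrite Rmin_left by lra. exists (a * a - 2 * b * b + a * b).
      split; [field | apply Rabs_le; split; nra].
    - rewrite Rmin_right by lra. exists (2 * a * a - b * b - a * b).
      split; [field | apply Rabs_le; split; nra]. }
  destruct E as [y [-> Hy]]. rewrite !Rabs_mult, (Rabs_right 2) by lra.
  pose proof (Rabs_pos w). pose proof (Rabs_pos y). nra.
Qed.

Lemma energy_double (x : R) : 2 * energy x = (g1' x + g2' x) * (g1' x + g2' x) + 4 * (u' x * u' x).
Proof. unfold energy, u1_of. field. Qed.

End ProfileIdentities.

Lemma tilt''_eq_swap (v : R) (g1 g2 g1' g2' g1'' g2'' : R -> R) (x : R) :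
  profile_ode v g1 g2 g1' g2' g1'' g2'' ->
  tilt g2'' g1'' x
  = (- 2 * u1_of g1 g2 x - v) * tilt g2' g1' x + 8 * u1_of g1 g2 x * Rmax (u1_of g1' g2' x) 0.
Proof.
  intros ode. rewrite (tilt''_eq _ _ _ _ _ _ _ (profile_ode_swap _ _ _ _ _ _ _ ode)).
  rewrite (u1_of_swap g1 g2), (u1_of_swap g1' g2'), Rmin_0_opp, Ropp_involutive. ring.
Qed.

Lemma u1_of_tilt (f1 f2 : R -> R) (x : R) : u1_of f1 f2 x = (tilt f2 f1 x - tilt f1 f2 x) / 8.
Proof. unfold u1_of, tilt. field. Qed.

Lemma neg_parts_growth_bound (p q u v B : R) : v <= 0 -> - B <= u <= B ->
  Rabs (2 * Rmin p 0 * ((2 * u - v) * p + 8 * u * Rmin ((q - p) / 8) 0) +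
        2 * Rmin q 0 * ((- 2 * u - v) * q + 8 * u * Rmax ((q - p) / 8) 0))
  <= (6 * B - 2 * v) * (Rmin p 0 * Rmin p 0 + Rmin q 0 * Rmin q 0).
Proof.
  intros Hv Hu. apply Rabs_le.
  assert (Hm : 0 <= B - u) by lra. assert (Hp : 0 <= B + u) by lra. assert (Hv' : 0 <= - v) by lra.
  assert (sq : forall a b, 0 <= a -> 0 <= a * (b * b))
    by (intros; apply Rmult_le_pos; [assumption | apply Rle_0_sqr]).
  pose proof (sq _ p Hm). pose proof (sq _ p Hp). pose proof (sq _ q Hm). pose proof (sq _ q Hp).
  pose proof (sq _ (p - q) Hm). pose proof (sq _ (p - q) Hp).
  pose proof (sq _ (p + q) Hm). pose proof (sq _ (p + q) Hp).
  pose proof (sq _ p Hv'). pose proof (sq _ q Hv').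
  destruct (Rle_dec p 0), (Rle_dec q 0), (Rle_dec ((q - p) / 8) 0);
  repeat first [rewrite (Rmin_left p) by lra | rewrite (Rmin_right p) by lra
               | rewrite (Rmin_left q) by lra | rewrite (Rmin_right q) by lra
               | rewrite (Rmin_left ((q - p) / 8)) by lra
               | rewrite (Rmin_right ((q - p) / 8)) by lra
               | rewrite (Rmax_left ((q - p) / 8)) by lra
               | rewrite (Rmax_right ((q - p) / 8)) by lra];
  split; nra.
Qed.

Lemma pos_parts_growth_bound (p q u v B : R) : v <= 0 -> - B <= u <= B ->
  Rabs (2 * Rmax p 0 * ((2 * u - v) * p + 8 * u * Rmin ((q - p) / 8) 0) * (Rmax q 0 * Rmax q 0)
        + Rmax p 0 * Rmax p 0 * (2 * Rmax q 0 * ((- 2 * u - v) * q + 8 * u * Rmax ((q - p) / 8) 0)))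
  <= (2 * B - 4 * v) * (Rmax p 0 * Rmax p 0 * (Rmax q 0 * Rmax q 0)).
Proof.
  intros Hv Hu.
  assert (Hzero : forall e K, e = 0 -> 0 = K -> Rabs e <= K)
    by (intros e K -> <-; rewrite Rabs_R0; lra).
  destruct (Rle_dec p 0); [rewrite (Rmax_right p) by lra; apply Hzero; ring|].
  destruct (Rle_dec q 0); [rewrite (Rmax_right q) by lra; apply Hzero; ring|].
  rewrite !Rmax_left by lra.
  set (dp := (2 * u - v) * p + 8 * u * Rmin ((q - p) / 8) 0).
  set (dq := (- 2 * u - v) * q + 8 * u * Rmax ((q - p) / 8) 0).
  assert (Hinner : Rabs (dp * q + p * dq) <= (B - 2 * v) * (p * q)).
  { unfold dp, dq. apply Rabs_le. assert (0 <= p * q) by nra.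
    destruct (Rle_dec ((q - p) / 8) 0).
    - rewrite Rmin_left, Rmax_right by lra.
      assert (0 <= (B - u) * (q * (p - q))) by (apply Rmult_le_pos; nra).
      assert (0 <= (B + u) * (q * (p - q))) by (apply Rmult_le_pos; nra).
      assert (0 <= (B - u) * (q * q)) by (apply Rmult_le_pos; nra).
      assert (0 <= (B + u) * (q * q)) by (apply Rmult_le_pos; nra).
      split; nra.
    - rewrite Rmin_right, Rmax_left by lra.
      assert (0 <= (B - u) * (p * (q - p))) by (apply Rmult_le_pos; nra).
      assert (0 <= (B + u) * (p * (q - p))) by (apply Rmult_le_pos; nra).
      assert (0 <= (B - u) * (p * p)) by (apply Rmult_le_pos; nra).
      assert (0 <= (B + u) * (p * p)) by (apply Rmult_le_pos; nra).
      split; nra. }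
  replace (2 * p * dp * (q * q) + p * p * (2 * q * dq)) with ((2 * p * q) * (dp * q + p * dq))
    by ring.
  rewrite Rabs_mult, (Rabs_right (2 * p * q)) by nra.
  apply Rmult_le_compat_l with (r := 2 * p * q) in Hinner; [nra | nra].
Qed.

(** * The logistic fronts *)

Definition logistic_gap (v y : R) : R := - 2 * v / (1 + exp (v * y)).
Definition front1 (v y : R) : R := logistic_gap v y - 1.
Definition front2 (v y : R) : R := 3 * logistic_gap v y - 1.

Lemma pos_of_increasing_limit_0 (W dW : R -> R) : (forall x, is_derive W x (dW x)) ->
  (forall x, 0 < dW x) -> is_lim W m_infty 0 -> forall x, 0 < W x.
Proof.
  intros Hd Hpos Hl x. apply Rnot_le_lt. intros Hx.
  destruct (MVT_open W dW Hd (x - 1) x ltac:(lra)) as [c [Hc E]].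
  assert (Hlt : W (x - 1) < 0) by (pose proof (Hpos c); nra).
  assert (Hle : Rbar_le 0 (W (x - 1))).
  { apply (is_lim_le_loc W (fun _ => W (x - 1)) m_infty); [| assumption | apply is_lim_const].
    exists (x - 1). intros y Hy. apply (nondecreasing_of_derive W dW Hd); [lra|].
    intros t _. apply Rlt_le, Hpos. }
  simpl in Hle. lra.
Qed.

Lemma logistic_unique (v : R) (W dW : R -> R) : v < 0 -> (forall x, is_derive W x (dW x)) ->
  (forall x, dW x = W x * (- 2 * v - W x) / 2) -> (forall x, 0 < dW x) ->
  is_lim W m_infty 0 -> exists s, forall x, W x = logistic_gap v (x + s).
Proof.
  intros Hv Hd HdW Hpos Hl.
  set (K := - 2 * v).
  assert (HW : forall x, 0 < W x) by exact (pos_of_increasing_limit_0 W dW Hd Hpos Hl).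
  assert (HKW : forall x, 0 < K - W x).
  { intros x. specialize (Hpos x). rewrite HdW in Hpos. specialize (HW x). fold K in Hpos.
    apply (Rmult_lt_reg_l (W x)); [assumption|]. nra. }
  set (l := fun x => ln (W x / (K - W x))).
  assert (Hl_lin : forall x, l x = l 0 - v * x).
  { assert (Hdl : forall t, is_derive (fun t => l t + v * t) t 0).
    { intros t. unfold l. specialize (HW t). specialize (HKW t). auto_derive.
      - repeat split; try (eapply ex_derive_of; eassumption);
          try (apply Rdiv_lt_0_compat); lra.
      - rewrite (Derive_of_is_derive W _ _ (Hd t)), HdW. unfold K in *. field. lra. }
    intros x. pose proof (constant_of_derive_0 _ _ Hdl (fun _ => eq_refl) x 0). lra. }
  exists (- l 0 / v). intros x.
  assert (Hexp : exp (l x) = W x / (K - W x))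
    by (apply exp_ln, Rdiv_lt_0_compat; [apply HW | apply HKW]).
  unfold logistic_gap. replace (v * (x + - l 0 / v)) with (- l x) by (rewrite Hl_lin; field; lra).
  rewrite exp_Ropp, Hexp. fold K.
  specialize (HW x). specialize (HKW x). field. lra.
Qed.

Section LogisticFront.
Variable v : R.
Hypothesis neg_speed : v < 0.

Definition logistic_gap' (y : R) : R := logistic_gap v y * (- 2 * v - logistic_gap v y) / 2.
Definition logistic_gap'' (y : R) : R := (- v - logistic_gap v y) * logistic_gap' y.

Lemma logistic_gap_bounds (y : R) : 0 < logistic_gap v y < - 2 * v.
Proof.
  unfold logistic_gap. pose proof (exp_pos (v * y)). split.
  - apply Rdiv_lt_0_compat; lra.
  - apply (Rmult_lt_reg_r (1 + exp (v * y))); [lra|].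
    unfold Rdiv. rewrite Rmult_assoc, Rinv_l by lra. nra.
Qed.

Lemma is_derive_logistic_gap (y : R) : is_derive (logistic_gap v) y (logistic_gap' y).
Proof.
  unfold logistic_gap', logistic_gap. pose proof (exp_pos (v * y)).
  auto_derive; [lra|]. field. lra.
Qed.

Lemma is_derive_logistic_gap' (y : R) : is_derive logistic_gap' y (logistic_gap'' y).
Proof.
  unfold logistic_gap'', logistic_gap', logistic_gap. pose proof (exp_pos (v * y)).
  auto_derive; [lra|]. field. lra.
Qed.

Lemma profile_ode_front :
  profile_ode v (front1 v) (front2 v) logistic_gap' (fun y => 3 * logistic_gap' y)
    logistic_gap'' (fun y => 3 * logistic_gap'' y).
Proof.
  assert (Hpos : forall y, 0 < logistic_gap' y).
  { intros y. pose proof (logistic_gap_bounds y). unfold logistic_gap'.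
    apply Rdiv_lt_0_compat; nra. }
  assert (Hu : forall y, u1_of (front1 v) (front2 v) y = logistic_gap v y)
    by (intros; unfold u1_of, front1, front2; field).
  assert (Hu' : forall y, u1_of logistic_gap' (fun y => 3 * logistic_gap' y) y = logistic_gap' y)
    by (intros; unfold u1_of; field).
  split; intros y.
  - unfold front1. rewrite <- (Rminus_0_r (logistic_gap' y)).
    exact (is_derive_minus _ _ y _ _ (is_derive_logistic_gap y) (is_derive_const 1 y)).
  - unfold front2. rewrite <- (Rminus_0_r (3 * logistic_gap' y)).
    exact (is_derive_minus _ _ y _ _ (is_derive_scal _ y 3 _ (is_derive_logistic_gap y))
             (is_derive_const 1 y)).
  - apply is_derive_logistic_gap'.
  - exact (is_derive_scal _ y 3 _ (is_derive_logistic_gap' y)).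
  - rewrite Hu, Hu', Rmax_left by (apply Rlt_le, Hpos). unfold logistic_gap''. ring.
  - rewrite Hu, Hu', Rmin_right by (apply Rlt_le, Hpos). unfold logistic_gap''. ring.
Qed.

Lemma lim_logistic_gap_m : is_lim (logistic_gap v) m_infty 0.
Proof.
  apply is_lim_spec. intros eps. set (K := - 2 * v). assert (HK : 0 < K) by (unfold K; lra).
  exists (ln (K / eps) / v). intros y Hy.
  pose proof (logistic_gap_bounds y). rewrite Rminus_0_r, Rabs_right by lra.
  assert (Hln : ln (K / eps) < v * y).
  { apply (Rmult_lt_compat_r (- v)) in Hy; [|lra].
    replace (ln (K / eps) / v * - v) with (- ln (K / eps)) in Hy by (field; lra). lra. }
  apply exp_increasing in Hln.
  rewrite exp_ln in Hln by (apply Rdiv_lt_0_compat; [lra | apply cond_pos]).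
  pose proof (cond_pos eps). unfold logistic_gap. fold K. pose proof (exp_pos (v * y)).
  apply (Rmult_lt_reg_r (1 + exp (v * y))); [lra|].
  unfold Rdiv. rewrite Rmult_assoc, Rinv_l, Rmult_1_r by lra.
  apply (Rmult_lt_compat_l eps) in Hln; [|assumption].
  replace (eps * (K / eps)) with K in Hln by (field; lra). nra.
Qed.

Lemma lim_logistic_gap_p : is_lim (logistic_gap v) p_infty (- 2 * v).
Proof.
  apply (is_lim_ext (fun y => - (logistic_gap v (- y) - (- 2 * v)) )).
  - intros y. unfold logistic_gap. pose proof (exp_pos (v * y)).
    replace (v * - y) with (- (v * y)) by ring. rewrite exp_Ropp. field.
    split; [lra | pose proof (exp_pos (v * y)); apply Rgt_not_eq; nra].
  - assert (H : is_lim (fun y => logistic_gap v y - - 2 * v) m_infty (2 * v))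
      by (apply (is_lim_affine_eq _ _ _ _ _ _ 1 0 (2 * v) _ lim_logistic_gap_m
                   lim_logistic_gap_m); [intros|]; ring).
    apply is_lim_reflect_p in H. replace (- (2 * v)) with (- 2 * v) in H by ring. exact H.
Qed.

End LogisticFront.

Lemma front_limits (v : R) : v < 0 ->
  lim_left (front1 v) (front2 v) (-1) (-1) /\
  lim_right (front1 v) (front2 v) (-2 * v - 1) (-6 * v - 1).
Proof.
  intros Hv.
  pose proof (lim_logistic_gap_m v Hv) as Lm. pose proof (lim_logistic_gap_p v Hv) as Lp.
  split; split; unfold front1, front2.
  - apply (is_lim_affine_eq _ _ _ _ _ _ 1 0 (-1) _ Lm Lm); [intros|]; ring.
  - apply (is_lim_affine_eq _ _ _ _ _ _ 3 0 (-1) _ Lm Lm); [intros|]; ring.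
  - apply (is_lim_affine_eq _ _ _ _ _ _ 1 0 (-1) _ Lp Lp); [intros|]; ring.
  - apply (is_lim_affine_eq _ _ _ _ _ _ 3 0 (-1) _ Lp Lp); [intros|]; ring.
Qed.

(** * Waves leaving the state (-1, -1) *)

Section ProfileAnalysis.
Variables (v : R) (g1 g2 g1' g2' g1'' g2'' : R -> R) (b1 b2 : R).
Hypothesis ode : profile_ode v g1 g2 g1' g2' g1'' g2''.
Hypothesis left_limits : lim_left g1 g2 (-1) (-1).
Hypothesis right_limits : lim_right g1 g2 b1 b2.

Let d1 := ode_deriv1 _ _ _ _ _ _ _ ode.
Let d2 := ode_deriv2 _ _ _ _ _ _ _ ode.

Local Notation u := (u1_of g1 g2).
Local Notation u' := (u1_of g1' g2').

Let du := is_derive_u _ _ _ _ _ _ _ ode.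
Let du' := is_derive_u' _ _ _ _ _ _ _ ode.
Let continuity_u' : continuity u' := continuity_of_derive _ _ du'.

Lemma lim_u_m : is_lim u m_infty 0.
Proof.
  destruct left_limits as [L1 L2].
  apply (is_lim_affine_eq _ _ _ _ _ _ (- / 2) (/ 2) 0 _ L1 L2); [intros; unfold u1_of|]; field.
Qed.

Lemma lim_u_p : is_lim u p_infty ((b2 - b1) / 2).
Proof.
  destruct right_limits as [L1 L2].
  apply (is_lim_affine_eq _ _ _ _ _ _ (- / 2) (/ 2) 0 _ L1 L2); [intros; unfold u1_of|]; field.
Qed.

Lemma u_bounded : exists B, forall x, Rabs (u x) <= B.
Proof. exact (bounded_of_limits u _ _ (continuity_of_derive _ _ du) lim_u_m lim_u_p). Qed.

Lemma slope_sum_eq (x : R) : g1' x + g2' x = - v * (g1 x + g2 x + 2) - 2 * (u x * u x).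
Proof.
  set (c := g1' 0 + g2' 0 + v * (g1 0 + g2 0) + 2 * (u 0 * u 0)).
  assert (E : forall x, g1' x + g2' x = - v * (g1 x + g2 x) - 2 * (u x * u x) + c).
  { intros y. pose proof (first_integral_constant _ _ _ _ _ _ _ ode y) as Hy. fold c in Hy. lra. }
  destruct left_limits as [L1 L2].
  assert (Hc : c + 2 * v = 0).
  { apply (limit_of_derive_m (fun x => g1 x + g2 x) (fun x => g1' x + g2' x) (-1 + -1)).
    - apply (is_derive_sum _ _ _ _ _ _ _ ode).
    - exact (is_lim_plus' _ _ _ _ _ L1 L2).
    - apply (is_lim_affine_eq _ _ _ _ _ _ (- v) (-2) c _ (is_lim_plus' _ _ _ _ _ L1 L2)
               (is_lim_sqr _ _ _ lim_u_m)); [intros y; rewrite E|]; ring. }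
  rewrite E. lra.
Qed.

Lemma lim_slope_sum_m : is_lim (fun x => g1' x + g2' x) m_infty 0.
Proof.
  destruct left_limits as [L1 L2].
  apply (is_lim_affine_eq _ _ _ _ _ _ (- v) (-2) (- 2 * v) _ (is_lim_plus' _ _ _ _ _ L1 L2)
           (is_lim_sqr _ _ _ lim_u_m)); [intros; rewrite slope_sum_eq|]; ring.
Qed.

Lemma lim_slope_sum_p : is_lim (fun x => g1' x + g2' x) p_infty 0.
Proof.
  destruct right_limits as [L1 L2].
  set (l := - v * (b1 + b2) - 2 * ((b2 - b1) / 2 * ((b2 - b1) / 2)) - 2 * v).
  assert (Hl : is_lim (fun x => g1' x + g2' x) p_infty l).
  { apply (is_lim_affine_eq _ _ _ _ _ _ (- v) (-2) (- 2 * v) _ (is_lim_plus' _ _ _ _ _ L1 L2)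
             (is_lim_sqr _ _ _ lim_u_p)); [intros; rewrite slope_sum_eq | unfold l]; ring. }
  replace 0 with l; [assumption|].
  apply (limit_of_derive_p (fun x => g1 x + g2 x) (fun x => g1' x + g2' x) (b1 + b2));
    [apply (is_derive_sum _ _ _ _ _ _ _ ode) | exact (is_lim_plus' _ _ _ _ _ L1 L2) | exact Hl].
Qed.

Lemma energy_zero_everywhere (x0 : R) : energy g1' g2' x0 = 0 -> forall x, energy g1' g2' x = 0.
Proof.
  intros H0. destruct u_bounded as [B HB].
  apply (gronwall _ _ (6 * B + 2 * Rabs v) (is_derive_energy _ _ _ _ _ _ _ ode)
           (energy_nonneg g1' g2') x0); [|exact H0].
  intros t. pose proof (energy_estimate _ _ _ _ _ _ _ ode t) as Hest.
  pose proof (energy_nonneg g1' g2' t). specialize (HB t).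
  replace (energy' g1' g2' g1'' g2'' t)
    with ((energy' g1' g2' g1'' g2'' t + 2 * v * energy g1' g2' t) - 2 * v * energy g1' g2' t)
    by ring.
  eapply Rle_trans; [apply Rabs_triang|]. rewrite Rabs_Ropp, !Rabs_mult, (Rabs_right 2) by lra.
  rewrite (Rabs_right (energy g1' g2' t)) by lra. nra.
Qed.

Lemma profile_const_of_energy_zero (x0 : R) : energy g1' g2' x0 = 0 -> profile_const g1 g2.
Proof.
  intros H0.
  assert (Hd : forall x, g1' x = 0 /\ g2' x = 0).
  { intros x. pose proof (energy_zero_everywhere x0 H0 x). unfold energy in H. split; nra. }
  exists (g1 0), (g2 0). intros x. split.
  - apply (constant_of_derive_0 g1 g1' d1). intros t; apply Hd.
  - apply (constant_of_derive_0 g2 g2' d2). intros t; apply Hd.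
Qed.

Lemma gap_slope_lower_bound (x c : R) : 0 < c -> c <= energy g1' g2' x ->
  Rabs (g1' x + g2' x) < Rmin 1 c -> Rmin 1 (c / 4) <= Rabs (u' x).
Proof.
  intros Hc Hx Hs. pose proof (energy_double g1' g2' x).
  pose proof (Rmin_l 1 c). pose proof (Rmin_r 1 c). pose proof (Rabs_pos (g1' x + g2' x)).
  pose proof (Rsqr_abs (g1' x + g2' x)). unfold Rsqr in *.
  eapply Rle_trans; [apply Rle_min_compat_l | apply Rmin_1_sqr_le_Rabs]. nra.
Qed.

(* If the energy stays above c > 0 on a tail, the first integral keeps |u'| away from 0
   there, which is incompatible with the limit of u. *)
Lemma energy_vanishes_left (X : R) :
  (forall x, x <= X -> energy' g1' g2' g1'' g2'' x <= 0) -> energy g1' g2' X = 0.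
Proof.
  intros Hd. destruct (Req_dec (energy g1' g2' X) 0) as [|Hne]; [assumption|exfalso].
  set (c := energy g1' g2' X).
  assert (Hc : 0 < c) by (pose proof (energy_nonneg g1' g2' X); unfold c in *; lra).
  assert (Hge : forall x, x <= X -> c <= energy g1' g2' x).
  { intros x Hx. apply (nonincreasing_of_derive _ _ (is_derive_energy _ _ _ _ _ _ _ ode));
      [assumption | intros; apply Hd; lra]. }
  pose proof lim_slope_sum_m as Hs. apply is_lim_spec in Hs. cbn in Hs.
  destruct (Hs (mkposreal _ (Rmin_pos 1 c Rlt_0_1 Hc))) as [M HM]. simpl in HM.
  apply (derive_away_from_0_no_limit_m u u' 0 (Rmin X M - 1) (Rmin 1 (c / 4)) du continuity_u'
           lim_u_m); [apply Rmin_pos; lra|].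
  intros x Hx. pose proof (Rmin_l X M). pose proof (Rmin_r X M).
  apply gap_slope_lower_bound; [assumption | apply Hge; lra |].
  rewrite <- (Rminus_0_r (g1' x + g2' x)). apply HM. lra.
Qed.

Lemma energy_vanishes_right (X : R) :
  (forall x, X <= x -> 0 <= energy' g1' g2' g1'' g2'' x) -> energy g1' g2' X = 0.
Proof.
  intros Hd. destruct (Req_dec (energy g1' g2' X) 0) as [|Hne]; [assumption|exfalso].
  set (c := energy g1' g2' X).
  assert (Hc : 0 < c) by (pose proof (energy_nonneg g1' g2' X); unfold c in *; lra).
  assert (Hge : forall x, X <= x -> c <= energy g1' g2' x).
  { intros x Hx. apply (nondecreasing_of_derive _ _ (is_derive_energy _ _ _ _ _ _ _ ode));
      [assumption | intros; apply Hd; lra]. }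
  pose proof lim_slope_sum_p as Hs. apply is_lim_spec in Hs. cbn in Hs.
  destruct (Hs (mkposreal _ (Rmin_pos 1 c Rlt_0_1 Hc))) as [M HM]. simpl in HM.
  apply (derive_away_from_0_no_limit_p u u' _ (Rmax X M + 1) (Rmin 1 (c / 4)) du continuity_u'
           lim_u_p); [apply Rmin_pos; lra|].
  intros x Hx. pose proof (Rmax_l X M). pose proof (Rmax_r X M).
  apply gap_slope_lower_bound; [assumption | apply Hge; lra |].
  rewrite <- (Rminus_0_r (g1' x + g2' x)). apply HM. lra.
Qed.

Lemma profile_const_pos_speed : 0 < v -> profile_const g1 g2.
Proof.
  intros Hv. pose proof lim_u_m as Hu. apply is_lim_spec in Hu. cbn in Hu.
  assert (Hv3 : 0 < v / 3) by lra.
  destruct (Hu (mkposreal _ Hv3)) as [M HM]. simpl in HM.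
  apply (profile_const_of_energy_zero (M - 1)), energy_vanishes_left. intros x Hx.
  specialize (HM x ltac:(lra)). rewrite Rminus_0_r in HM.
  pose proof (energy_estimate _ _ _ _ _ _ _ ode x) as Hest. apply Rabs_le_between in Hest.
  pose proof (energy_nonneg g1' g2' x). nra.
Qed.

Lemma profile_const_of_equal_right_limits : v < 0 -> b1 = b2 -> profile_const g1 g2.
Proof.
  intros Hv Hb. pose proof lim_u_p as Hu. rewrite Hb, Rminus_diag, Rdiv_0_l in Hu.
  apply is_lim_spec in Hu. cbn in Hu.
  assert (Hv3 : 0 < - v / 3) by lra.
  destruct (Hu (mkposreal _ Hv3)) as [M HM]. simpl in HM.
  apply (profile_const_of_energy_zero (M + 1)), energy_vanishes_right. intros x Hx.
  specialize (HM x ltac:(lra)). rewrite Rminus_0_r in HM.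
  pose proof (energy_estimate _ _ _ _ _ _ _ ode x) as Hest. apply Rabs_le_between in Hest.
  pose proof (energy_nonneg g1' g2' x). nra.
Qed.

Lemma gap_zero_speed : v = 0 -> forall x, u x = 0.
Proof.
  intros Hv.
  set (u'' := u1_of g1'' g2'').
  assert (U2 : forall x, u'' x = u x * u x * u x + u x * Rabs (u' x)).
  { intros x. unfold u''. rewrite (u''_eq _ _ _ _ _ _ _ ode), slope_sum_eq, Hv. field. }
  (* u u' is nondecreasing and is half the derivative of u^2, which has limits at both ends. *)
  set (Y := fun x => u x * u' x).
  assert (HY : forall x, is_derive Y x (u' x * u' x + u x * u'' x))
    by (intros x; exact (is_derive_mult _ _ x _ _ (du x) (du' x) Rmult_comm)).
  assert (HY_nonneg : forall x, 0 <= u' x * u' x + u x * u'' x).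
  { intros x. rewrite U2. pose proof (Rabs_pos (u' x)). nra. }
  assert (Hsq : forall x, is_derive (fun t => u t * u t) x (2 * Y x)).
  { intros x. unfold Y. replace (2 * (u x * u' x)) with (u' x * u x + u x * u' x) by ring.
    exact (is_derive_mult _ _ x _ _ (du x) (du x) Rmult_comm). }
  assert (Y0 : forall x, Y x = 0).
  { intros x1. destruct (Rtotal_order (Y x1) 0) as [Hn|[H0|Hp]]; [exfalso| assumption |exfalso].
    - pose proof (is_lim_sqr _ _ _ lim_u_m) as Hlim. rewrite Rmult_0_l in Hlim.
      apply (derive_le_no_limit_m _ _ Hsq 0 x1 (- 2 * Y x1) Hlim); [lra|].
      intros x Hx. pose proof (nondecreasing_of_derive Y _ HY x x1 Hx (fun t _ => HY_nonneg t)).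
      lra.
    - apply (derive_ge_no_limit_p _ _ Hsq _ x1 (2 * Y x1) (is_lim_sqr _ _ _ lim_u_p)); [lra|].
      intros x Hx. pose proof (nondecreasing_of_derive Y _ HY x1 x Hx (fun t _ => HY_nonneg t)).
      lra. }
  intros x. assert (HdY : u' x * u' x + u x * u'' x = 0).
  { assert (H : is_derive (fun _ : R => 0) x (u' x * u' x + u x * u'' x))
      by (apply (is_derive_ext Y); [apply Y0 | apply HY]).
    rewrite <- (is_derive_unique _ _ _ H). apply Derive_const. }
  rewrite U2 in HdY. pose proof (Rabs_pos (u' x)) as Habs.
  assert (Hu4 : u x * u x * (u x * u x) = 0).
  { pose proof (Rmult_le_pos _ _ (Rle_0_sqr (u x)) Habs). nra. }
  apply Rmult_integral in Hu4. destruct Hu4 as [Hu2|Hu2];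
    apply Rmult_integral in Hu2; destruct Hu2; assumption.
Qed.

Lemma profile_rest_zero_speed : v = 0 -> forall x, g1 x = -1 /\ g2 x = -1.
Proof.
  intros Hv. pose proof (gap_zero_speed Hv) as u0.
  assert (Hsum : forall x, g1 x + g2 x = -2).
  { intros x. destruct left_limits as [L1 L2]. replace (-2) with (-1 + -1) by ring.
    apply (constant_limit_eq (fun t => g1 t + g2 t) m_infty _ (-1 + -1));
      [| exact (is_lim_plus' _ _ _ _ _ L1 L2)].
    intros y.
    apply (constant_of_derive_0 _ (fun t => g1' t + g2' t) (is_derive_sum _ _ _ _ _ _ _ ode)).
    intros t. rewrite slope_sum_eq, u0, Hv. ring. }
  intros x. specialize (Hsum x). specialize (u0 x). unfold u1_of in u0. lra.
Qed.

(** * Negative speeds *)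

Local Notation p := (tilt g1' g2').
Local Notation q := (tilt g2' g1').

Let dp (x : R) : is_derive p x (tilt g1'' g2'' x) := is_derive_tilt' _ _ _ _ _ _ _ ode x.
Let dq (x : R) : is_derive q x (tilt g2'' g1'' x) :=
  is_derive_tilt' _ _ _ _ _ _ _ (profile_ode_swap _ _ _ _ _ _ _ ode) x.

Lemma tilt''_eq_pq (x : R) :
  tilt g1'' g2'' x = (2 * u x - v) * p x + 8 * u x * Rmin ((q x - p x) / 8) 0 /\
  tilt g2'' g1'' x = (- 2 * u x - v) * q x + 8 * u x * Rmax ((q x - p x) / 8) 0.
Proof.
  rewrite <- u1_of_tilt.
  exact (conj (tilt''_eq _ _ _ _ _ _ _ ode x) (tilt''_eq_swap _ _ _ _ _ _ _ x ode)).
Qed.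

Lemma tilts_nonneg_everywhere : v < 0 -> (exists x0, 0 <= p x0 /\ 0 <= q x0) ->
  forall x, 0 <= p x /\ 0 <= q x.
Proof.
  intros Hv [x0 [Hp0 Hq0]] x. destruct u_bounded as [B HB].
  set (rho := fun t => Rmin (p t) 0 * Rmin (p t) 0 + Rmin (q t) 0 * Rmin (q t) 0).
  assert (Hrho : rho x = 0).
  { apply (gronwall rho (fun t => 2 * Rmin (p t) 0 * tilt g1'' g2'' t
                                 + 2 * Rmin (q t) 0 * tilt g2'' g1'' t) (6 * B - 2 * v)) with x0.
    - intros t. apply (is_derive_plus (fun t => Rmin (p t) 0 * Rmin (p t) 0)
                                      (fun t => Rmin (q t) 0 * Rmin (q t) 0));
        apply is_derive_neg_part_sqr; [apply dp | apply dq].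
    - intros t. unfold rho. nra.
    - intros t. destruct (tilt''_eq_pq t) as [-> ->].
      apply neg_parts_growth_bound; [lra | apply Rabs_le_between, HB].
    - unfold rho. rewrite (Rmin_right (p x0)), (Rmin_right (q x0)) by lra. ring. }
  unfold rho in Hrho. pose proof (Rle_0_sqr (Rmin (p x) 0)). pose proof (Rle_0_sqr (Rmin (q x) 0)).
  unfold Rsqr in *. split.
  - destruct (Rle_dec 0 (p x)); [assumption|]. rewrite Rmin_left in Hrho by lra. nra.
  - destruct (Rle_dec 0 (q x)); [assumption|]. rewrite (Rmin_left (q x)) in Hrho by lra. nra.
Qed.

Lemma tilt_nonpos_everywhere : v < 0 -> (exists x0, p x0 <= 0 \/ q x0 <= 0) ->
  forall x, p x <= 0 \/ q x <= 0.
Proof.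
  intros Hv [x0 H0] x. destruct u_bounded as [B HB].
  set (P2 := fun t => Rmax (p t) 0 * Rmax (p t) 0).
  set (Q2 := fun t => Rmax (q t) 0 * Rmax (q t) 0).
  assert (Hpi : P2 x * Q2 x = 0).
  { apply (gronwall (fun t => P2 t * Q2 t)
      (fun t => 2 * Rmax (p t) 0 * tilt g1'' g2'' t * Q2 t
                + P2 t * (2 * Rmax (q t) 0 * tilt g2'' g1'' t)) (2 * B - 4 * v)) with x0.
    - intros t. exact (is_derive_mult P2 Q2 t _ _ (is_derive_pos_part_sqr _ _ _ (dp t))
                         (is_derive_pos_part_sqr _ _ _ (dq t)) Rmult_comm).
    - intros t. unfold P2, Q2. apply Rmult_le_pos; nra.
    - intros t. unfold P2, Q2. destruct (tilt''_eq_pq t) as [-> ->].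
      apply pos_parts_growth_bound; [lra | apply Rabs_le_between, HB].
    - unfold P2, Q2.
      destruct H0; [rewrite (Rmax_right (p x0)) by lra | rewrite (Rmax_right (q x0)) by lra];
        ring. }
  unfold P2, Q2 in Hpi. destruct (Rle_dec (p x) 0); [left; assumption|].
  destruct (Rle_dec (q x) 0); [right; assumption|]. exfalso.
  rewrite !Rmax_left in Hpi by lra.
  assert (0 < p x * p x * (q x * q x)) by (apply Rmult_lt_0_compat; nra). lra.
Qed.

Lemma lim_tilt_p : is_lim (tilt g1 g2) p_infty (3 * b1 - b2).
Proof.
  destruct right_limits as [L1 L2].
  apply (is_lim_affine_eq _ _ _ _ _ _ 3 (-1) 0 _ L1 L2); [intros; unfold tilt|]; ring.
Qed.

Lemma u_eventually_above : 0 < b2 - b1 -> exists X, forall x, X <= x -> (b2 - b1) / 4 <= u x.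
Proof.
  intros Hb. pose proof lim_u_p as Hu. apply is_lim_spec in Hu. cbn in Hu.
  assert (Hb4 : 0 < (b2 - b1) / 4) by lra.
  destruct (Hu (mkposreal _ Hb4)) as [M HM]. simpl in HM.
  exists (M + 1). intros x Hx. specialize (HM x ltac:(lra)). apply Rabs_def2 in HM. lra.
Qed.

Lemma no_positive_tilts : v < 0 -> 0 < b2 - b1 -> ~ (forall x, 0 < p x /\ 0 < q x).
Proof.
  intros Hv Hb Hpq. destruct (u_eventually_above Hb) as [X HX].
  assert (Hd : forall x, X <= x -> 0 <= tilt g1'' g2'' x).
  { intros x Hx. destruct (tilt''_eq_pq x) as [-> _].
    specialize (HX x Hx). destruct (Hpq x) as [Hp Hq]. destruct (Rle_dec ((q x - p x) / 8) 0).
    - rewrite Rmin_left by lra. nra.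
    - rewrite Rmin_right by lra. nra. }
  apply (derive_ge_no_limit_p _ _ (is_derive_tilt _ _ _ _ _ _ _ ode) _ X (p X) lim_tilt_p);
    [apply Hpq|].
  intros x Hx. apply (nondecreasing_of_derive _ _ dp); [assumption|].
  intros t Ht. apply Hd. lra.
Qed.

(* Where u' < 0 we have q < 0, so that (u'^-)^2 satisfies a forward Gronwall inequality. *)
Lemma gap_slope_nonneg_persists (y : R) : v < 0 -> (forall x, p x < 0 \/ q x < 0) ->
  (forall x, y <= x -> 0 <= u x) -> 0 <= u' y -> forall x, y <= x -> 0 <= u' x.
Proof.
  intros Hv Hpq Hu Hy. destruct u_bounded as [B HB].
  set (sigma := fun t => Rmin (u' t) 0 * Rmin (u' t) 0).
  assert (Hsigma : forall x, y <= x -> sigma x = 0).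
  { apply (gronwall_forward sigma (fun t => 2 * Rmin (u' t) 0 * u1_of g1'' g2'' t) (2 * (B - v))).
    - intros t. apply is_derive_neg_part_sqr, du'.
    - intros t. unfold sigma. nra.
    - intros t Ht. unfold sigma. destruct (Rle_dec (u' t) 0) as [Hneg|Hpos].
      + rewrite Rmin_left by lra. rewrite (u''_eq _ _ _ _ _ _ _ ode), Rabs_left1 by lra.
        rewrite u1_of_tilt in *. specialize (Hu t Ht). specialize (HB t).
        apply Rabs_le_between in HB.
        replace (g1' t + g2' t) with ((p t + q t) / 2) by (unfold tilt; field).
        assert (Hq : q t <= 0) by (destruct (Hpq t); lra).
        set (a := (q t - p t) / 8) in *. replace (p t) with (q t - 8 * a) by (unfold a; field).
        assert (0 <= u t * (a * q t)) by (apply Rmult_le_pos; nra).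
        assert (0 <= (B - u t) * (a * a)) by (apply Rmult_le_pos; nra).
        nra.
      + rewrite Rmin_right by lra. nra.
    - unfold sigma. rewrite Rmin_right by lra. ring. }
  intros x Hx. specialize (Hsigma x Hx). unfold sigma in Hsigma.
  destruct (Rle_dec 0 (u' x)); [assumption|]. rewrite Rmin_left in Hsigma by lra. nra.
Qed.

(* At the maximum of u one would have u' = 0, hence p = q < 0 and u'' = - u (p + q) / 4 > 0. *)
Lemma no_decreasing_positive_gap (X : R) : (forall x, p x < 0 \/ q x < 0) ->
  (forall x, X <= x -> 0 < u x) -> (forall x, X <= x -> u' x < 0) -> False.
Proof.
  intros Hpq Hu Hu'.
  destruct (exists_global_max u X (continuity_of_derive _ _ du) lim_u_m (Hu X (Rle_refl X)))
    as [xi Hxi].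
  { intros x Hx. apply (nonincreasing_of_derive _ _ du); [assumption|].
    intros t Ht. left. apply Hu'. lra. }
  pose proof (second_derive_at_max u u' _ xi du du' Hxi) as Hmax.
  pose proof (derive_0_at_max u xi _ (du xi) Hxi) as H0.
  rewrite (u''_eq _ _ _ _ _ _ _ ode), H0, Rabs_R0 in Hmax.
  rewrite u1_of_tilt in H0.
  replace (g1' xi + g2' xi) with ((p xi + q xi) / 2) in Hmax by (unfold tilt; field).
  assert (p xi + q xi < 0) by (destruct (Hpq xi); lra).
  assert (0 < u xi) by (pose proof (Hxi X); pose proof (Hu X (Rle_refl X)); lra).
  nra.
Qed.

Lemma no_negative_tilt : v < 0 -> 0 < b2 - b1 -> ~ (forall x, p x < 0 \/ q x < 0).
Proof.
  intros Hv Hb Hpq. destruct (u_eventually_above Hb) as [X HX].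
  assert (Hu : forall x, X <= x -> 0 < u x) by (intros x Hx; specialize (HX x Hx); lra).
  destruct (classic (exists y, X <= y /\ 0 <= u' y)) as [[y [Hy Hy']]|Hno].
  - assert (Hu' : forall x, y <= x -> 0 <= u' x).
    { apply (gap_slope_nonneg_persists y Hv Hpq); [|assumption].
      intros x Hx. left. apply Hu. lra. }
    assert (Hp : forall x, y <= x -> p x < 0).
    { intros x Hx. specialize (Hu' x Hx). rewrite u1_of_tilt in Hu'. destruct (Hpq x); lra. }
    assert (Hdp : forall x, y <= x -> tilt g1'' g2'' x <= 0).
    { intros x Hx. destruct (tilt''_eq_pq x) as [-> _]. rewrite <- u1_of_tilt.
      rewrite Rmin_right by (apply Hu'; assumption).
      specialize (Hu x ltac:(lra)). specialize (Hp x Hx). nra. }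
    apply (derive_le_no_limit_p _ _ (is_derive_tilt _ _ _ _ _ _ _ ode) _ y (- p y) lim_tilt_p);
      [specialize (Hp y (Rle_refl y)); lra|].
    intros x Hx. rewrite Ropp_involutive. apply (nonincreasing_of_derive _ _ dp); [assumption|].
    intros t Ht. apply Hdp. lra.
  - apply (no_decreasing_positive_gap X Hpq Hu). intros x Hx.
    destruct (Rlt_le_dec (u' x) 0); [assumption|]. exfalso. apply Hno. exists x. split; assumption.
Qed.

Lemma degenerate_tilts : ~ profile_const g1 g2 ->
  (forall x, 0 <= p x /\ 0 <= q x /\ (p x = 0 \/ q x = 0)) ->
  (forall x, p x = 0 /\ 0 < u' x) \/ (forall x, q x = 0 /\ u' x < 0).
Proof.
  intros Hnc Hpq.
  assert (Hu' : forall x, u' x <> 0).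
  { intros x H0. apply Hnc, (profile_const_of_energy_zero x). rewrite u1_of_tilt in H0.
    destruct (Hpq x) as [_ [_ Hz]]. unfold energy. unfold tilt in *.
    assert (g1' x = 0 /\ g2' x = 0) as [-> ->] by lra. ring. }
  assert (Hsign : forall x, 0 < u' 0 * u' x).
  { intros x. destruct (Rle_dec 0 x).
    - apply sign_constant; [exact continuity_u' | assumption | intros t _; apply Hu'].
    - rewrite Rmult_comm.
      apply sign_constant; [exact continuity_u' | lra | intros t _; apply Hu']. }
  destruct (Rlt_le_dec 0 (u' 0)) as [Hpos|Hneg]; [left|right]; intros x;
    specialize (Hsign x); destruct (Hpq x) as [Hp [Hq Hz]].
  - assert (Hx : 0 < u' x) by nra. split; [|assumption].
    rewrite u1_of_tilt in Hx. destruct Hz; lra.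
  - assert (Hx : u' x < 0) by (pose proof (Hu' 0); destruct Hneg; [nra | contradiction]).
    split; [|assumption]. rewrite u1_of_tilt in Hx. destruct Hz; lra.
Qed.

Lemma front_of_zero_tilt : v < 0 -> (forall x, p x = 0 /\ 0 < u' x) ->
  exists s, forall x, g1 x = front1 v (x + s) /\ g2 x = front2 v (x + s).
Proof.
  intros Hv Hp. destruct left_limits as [L1 L2].
  assert (Htilt : forall x, tilt g1 g2 x = -2).
  { intros x. apply (constant_limit_eq (tilt g1 g2) m_infty _ _).
    2: { apply (is_lim_affine_eq _ _ _ _ _ _ 3 (-1) 0 _ L1 L2); [intros; unfold tilt|]; ring. }
    intros y. apply (constant_of_derive_0 _ _ (is_derive_tilt _ _ _ _ _ _ _ ode)).
    intros t. apply Hp. }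
  assert (Hg2 : forall x, g2 x = 3 * g1 x + 2)
    by (intros x; specialize (Htilt x); unfold tilt in Htilt; lra).
  assert (Hg2' : forall x, g2' x = 3 * g1' x)
    by (intros x; destruct (Hp x) as [H _]; unfold tilt in H; lra).
  destruct (logistic_unique v (fun x => g1 x + 1) g1' Hv) as [s Hs].
  - intros x. rewrite <- (Rplus_0_r (g1' x)).
    exact (is_derive_plus _ _ x _ _ (d1 x) (is_derive_const 1 x)).
  - intros x. pose proof (slope_sum_eq x) as H. unfold u1_of in H. rewrite Hg2', Hg2 in H. nra.
  - intros x. destruct (Hp x) as [_ H]. unfold u1_of in H. rewrite Hg2' in H. lra.
  - apply (is_lim_affine_eq _ _ _ _ _ _ 1 0 1 _ L1 L1); [intros|]; ring.
  - exists s. intros x. specialize (Hs x). unfold front1, front2. rewrite Hg2. lra.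
Qed.

End ProfileAnalysis.

Section NegativeSpeed.
Variables (v : R) (g1 g2 g1' g2' g1'' g2'' : R -> R) (b1 b2 : R).
Hypothesis ode : profile_ode v g1 g2 g1' g2' g1'' g2''.
Hypothesis left_limits : lim_left g1 g2 (-1) (-1).
Hypothesis right_limits : lim_right g1 g2 b1 b2.
Hypothesis neg_speed : v < 0.

Let ode_swap := profile_ode_swap _ _ _ _ _ _ _ ode.
Let left_swap := lim_left_swap _ _ _ _ left_limits.
Let right_swap := lim_right_swap _ _ _ _ right_limits.

Local Notation p := (tilt g1' g2').
Local Notation q := (tilt g2' g1').

Lemma tilts_degenerate : b1 <> b2 ->
  forall x, 0 <= p x /\ 0 <= q x /\ (p x = 0 \/ q x = 0).
Proof.
  intros Hb.
  assert (Hpos : ~ (forall x, 0 < p x /\ 0 < q x)).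
  { intros H. destruct (Rlt_le_dec b1 b2).
    - apply (no_positive_tilts _ _ _ _ _ _ _ _ _ ode right_limits neg_speed); [lra | exact H].
    - apply (no_positive_tilts _ _ _ _ _ _ _ _ _ ode_swap right_swap neg_speed); [lra|].
      intros x. destruct (H x). split; assumption. }
  assert (Hneg : ~ (forall x, p x < 0 \/ q x < 0)).
  { intros H. destruct (Rlt_le_dec b1 b2).
    - apply (no_negative_tilt _ _ _ _ _ _ _ _ _ ode left_limits right_limits neg_speed);
        [lra | exact H].
    - apply (no_negative_tilt _ _ _ _ _ _ _ _ _ ode_swap left_swap right_swap neg_speed); [lra|].
      intros x. destruct (H x); [right | left]; assumption. }
  destruct (classic (exists x0, 0 <= p x0 /\ 0 <= q x0)) as [Hex|Hnex].
  - pose proof (tilts_nonneg_everywhere _ _ _ _ _ _ _ _ _ ode left_limits right_limits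
                  neg_speed Hex) as Hge.
    destruct (classic (exists x1, p x1 = 0 \/ q x1 = 0)) as [[x1 Hx1]|Hnz].
    + assert (Hx1' : p x1 <= 0 \/ q x1 <= 0) by (destruct Hx1; [left|right]; lra).
      pose proof (tilt_nonpos_everywhere _ _ _ _ _ _ _ _ _ ode left_limits right_limits neg_speed
                    (ex_intro _ x1 Hx1')) as Hle.
      intros x. destruct (Hge x), (Hle x); repeat split; try assumption; [left|right]; lra.
    + exfalso. apply Hpos. intros x. destruct (Hge x) as [[Hp|Hp] [Hq|Hq]]; try (split; assumption);
        exfalso; apply Hnz; exists x; auto.
  - exfalso. apply Hneg. intros x.
    destruct (Rlt_le_dec (p x) 0); [left; assumption|].
    destruct (Rlt_le_dec (q x) 0); [right; assumption|].
    exfalso. apply Hnex. exists x. split; assumption.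
Qed.

Lemma classification_neg_speed : ~ profile_const g1 g2 ->
  (exists s, forall x, g1 x = front1 v (x + s) /\ g2 x = front2 v (x + s)) \/
  (exists s, forall x, g1 x = front2 v (x + s) /\ g2 x = front1 v (x + s)).
Proof.
  intros Hnc.
  assert (Hb : b1 <> b2).
  { intros Hb. apply Hnc.
    exact (profile_const_of_equal_right_limits _ _ _ _ _ _ _ _ _ ode left_limits right_limits
             neg_speed Hb). }
  destruct (degenerate_tilts _ _ _ _ _ _ _ _ _ ode left_limits right_limits Hnc
              (tilts_degenerate Hb)) as [H|H]; [left|right].
  - exact (front_of_zero_tilt _ _ _ _ _ _ _ ode left_limits neg_speed H).
  - destruct (front_of_zero_tilt _ _ _ _ _ _ _ ode_swap left_swap neg_speed) as [s Hs].
    + intros x. destruct (H x) as [Hq Hu]. rewrite u1_of_swap. split; [assumption | lra].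
    + exists s. intros x. destruct (Hs x). split; assumption.
Qed.

End NegativeSpeed.

(** * The two boundary states *)

Lemma TW_limits (v : R) (g1 g2 : R -> R) : is_TW v g1 g2 ->
  exists a1 a2 b1 b2, lim_left g1 g2 a1 a2 /\ lim_right g1 g2 b1 b2.
Proof.
  intros (_ & _ & _ & _ & (a1 & a2 & b1 & b2 & L1 & L2 & R1 & R2) & _).
  exists a1, a2, b1, b2. split; split; assumption.
Qed.

Lemma profile_ode_reflect_TW (v : R) (g1 g2 : R -> R) : is_TW v g1 g2 ->
  exists g1' g2' g1'' g2'',
    profile_ode (- v) (fun x => - g1 (- x)) (fun x => - g2 (- x)) g1' g2' g1'' g2''.
Proof.
  intros Htw. eexists _, _, _, _.
  exact (profile_ode_reflect _ _ _ _ _ _ _ (profile_ode_of_TW v g1 g2 Htw)).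
Qed.

Lemma profile_const_reflect (g1 g2 : R -> R) :
  profile_const (fun x => - g1 (- x)) (fun x => - g2 (- x)) -> profile_const g1 g2.
Proof.
  intros [a1 [a2 H]]. exists (- a1), (- a2). intros x. destruct (H (- x)) as [A B].
  rewrite Ropp_involutive in A, B. split; lra.
Qed.

Lemma left_state_neg_speed (v : R) : v < 0 ->
  exists h1 h2 k1 k2 : R -> R,
    (is_TW v h1 h2 /\ lim_left h1 h2 (-1) (-1) /\ lim_right h1 h2 (-2 * v - 1) (-6 * v - 1)) /\
    (is_TW v k1 k2 /\ lim_left k1 k2 (-1) (-1) /\ lim_right k1 k2 (-6 * v - 1) (-2 * v - 1)) /\
    (forall g1 g2 : R -> R,
       is_TW v g1 g2 -> lim_left g1 g2 (-1) (-1) -> ~ profile_const g1 g2 ->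
       profile_translate g1 g2 h1 h2 \/ profile_translate g1 g2 k1 k2).
Proof.
  intros Hv. destruct (front_limits v Hv) as [L R].
  pose proof (profile_ode_front v Hv) as F.
  exists (front1 v), (front2 v), (front2 v), (front1 v). split; [|split].
  - split; [exact (TW_of_profile_ode _ _ _ _ _ _ _ _ _ _ _ F L R) | split; assumption].
  - split; [|split; [apply lim_left_swap | apply lim_right_swap]; assumption].
    exact (TW_of_profile_ode _ _ _ _ _ _ _ _ _ _ _ (profile_ode_swap _ _ _ _ _ _ _ F)
             (lim_left_swap _ _ _ _ L) (lim_right_swap _ _ _ _ R)).
  - intros g1 g2 Htw Hl Hnc. destruct (TW_limits v g1 g2 Htw) as (a1 & a2 & b1 & b2 & _ & Hr).
    exact (classification_neg_speed _ _ _ _ _ _ _ _ _ (profile_ode_of_TW v g1 g2 Htw) Hl Hr Hv Hnc).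
Qed.

Lemma left_state_zero_speed (g1 g2 : R -> R) : is_TW 0 g1 g2 -> lim_left g1 g2 (-1) (-1) ->
  forall x, g1 x = -1 /\ g2 x = -1.
Proof.
  intros Htw Hl. destruct (TW_limits 0 g1 g2 Htw) as (a1 & a2 & b1 & b2 & _ & Hr).
  exact (profile_rest_zero_speed _ _ _ _ _ _ _ _ _ (profile_ode_of_TW 0 g1 g2 Htw) Hl Hr eq_refl).
Qed.

Lemma left_state_pos_speed (v : R) : v > 0 -> forall g1 g2 : R -> R,
  is_TW v g1 g2 -> lim_left g1 g2 (-1) (-1) -> profile_const g1 g2.
Proof.
  intros Hv g1 g2 Htw Hl. destruct (TW_limits v g1 g2 Htw) as (a1 & a2 & b1 & b2 & _ & Hr).
  exact (profile_const_pos_speed _ _ _ _ _ _ _ _ _ (profile_ode_of_TW v g1 g2 Htw) Hl Hr Hv).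
Qed.

Lemma right_state_pos_speed (v : R) : v > 0 ->
  exists h1 h2 k1 k2 : R -> R,
    (is_TW v h1 h2 /\ lim_left h1 h2 (-2 * v + 1) (-6 * v + 1) /\ lim_right h1 h2 1 1) /\
    (is_TW v k1 k2 /\ lim_left k1 k2 (-6 * v + 1) (-2 * v + 1) /\ lim_right k1 k2 1 1) /\
    (forall g1 g2 : R -> R,
       is_TW v g1 g2 -> lim_right g1 g2 1 1 -> ~ profile_const g1 g2 ->
       profile_translate g1 g2 h1 h2 \/ profile_translate g1 g2 k1 k2).
Proof.
  intros Hv. assert (Hv' : - v < 0) by lra. destruct (front_limits (- v) Hv') as [L R].
  pose proof (profile_ode_reflect _ _ _ _ _ _ _ (profile_ode_front (- v) Hv')) as F.
  rewrite Ropp_involutive in F.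
  set (h1 := fun x => - front1 (- v) (- x)). set (h2 := fun x => - front2 (- v) (- x)).
  assert (Lh : lim_left h1 h2 (-2 * v + 1) (-6 * v + 1))
    by (apply (lim_left_reflect _ _ _ _ _ _ R); ring).
  assert (Rh : lim_right h1 h2 1 1) by (apply (lim_right_reflect _ _ _ _ _ _ L); ring).
  exists h1, h2, h2, h1. split; [|split].
  - split; [exact (TW_of_profile_ode _ _ _ _ _ _ _ _ _ _ _ F Lh Rh) | split; assumption].
  - split; [|split; [apply lim_left_swap | apply lim_right_swap]; assumption].
    exact (TW_of_profile_ode _ _ _ _ _ _ _ _ _ _ _ (profile_ode_swap _ _ _ _ _ _ _ F)
             (lim_left_swap _ _ _ _ Lh) (lim_right_swap _ _ _ _ Rh)).
  - intros g1 g2 Htw Hr Hnc. destruct (TW_limits v g1 g2 Htw) as (a1 & a2 & b1 & b2 & Hl & _).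
    destruct (profile_ode_reflect_TW v g1 g2 Htw) as (g1' & g2' & g1'' & g2'' & G).
    destruct (classification_neg_speed _ _ _ _ _ _ _ (- a1) (- a2) G
                (lim_left_reflect _ _ 1 1 (-1) (-1) Hr ltac:(ring) ltac:(ring))
                (lim_right_reflect _ _ _ _ _ _ Hl eq_refl eq_refl) Hv'
                (fun H => Hnc (profile_const_reflect _ _ H))) as [[s Hs]|[s Hs]];
      [left|right]; exists (- s); intros x; destruct (Hs (- x)) as [A B];
      unfold h1, h2; rewrite Ropp_involutive in A, B;
      replace (- (x + - s)) with (- x + s) by ring; split; lra.
Qed.

Lemma right_state_zero_speed (g1 g2 : R -> R) : is_TW 0 g1 g2 -> lim_right g1 g2 1 1 ->
  forall x, g1 x = 1 /\ g2 x = 1.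
Proof.
  intros Htw Hr. destruct (TW_limits 0 g1 g2 Htw) as (a1 & a2 & b1 & b2 & Hl & _).
  destruct (profile_ode_reflect_TW 0 g1 g2 Htw) as (g1' & g2' & g1'' & g2'' & G).
  rewrite Ropp_0 in G. intros x.
  destruct (profile_rest_zero_speed _ _ _ _ _ _ _ (- a1) (- a2) G
              (lim_left_reflect _ _ 1 1 (-1) (-1) Hr ltac:(ring) ltac:(ring))
              (lim_right_reflect _ _ _ _ _ _ Hl eq_refl eq_refl) eq_refl (- x)) as [A B].
  rewrite Ropp_involutive in A, B. split; lra.
Qed.

Lemma right_state_neg_speed (v : R) : v < 0 -> forall g1 g2 : R -> R,
  is_TW v g1 g2 -> lim_right g1 g2 1 1 -> profile_const g1 g2.
Proof.
  intros Hv g1 g2 Htw Hr. destruct (TW_limits v g1 g2 Htw) as (a1 & a2 & b1 & b2 & Hl & _).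
  destruct (profile_ode_reflect_TW v g1 g2 Htw) as (g1' & g2' & g1'' & g2'' & G).
  apply profile_const_reflect.
  apply (profile_const_pos_speed _ _ _ _ _ _ _ (- a1) (- a2) G
           (lim_left_reflect _ _ 1 1 (-1) (-1) Hr ltac:(ring) ltac:(ring))
           (lim_right_reflect _ _ _ _ _ _ Hl eq_refl eq_refl)). lra.
Qed.

Theorem theorem3 :
  (* (A) *)
  ((forall v : R, v < 0 ->
     exists h1 h2 k1 k2 : R -> R,
       (is_TW v h1 h2 /\ lim_left h1 h2 (-1) (-1) /\
        lim_right h1 h2 (-2 * v - 1) (-6 * v - 1)) /\
       (is_TW v k1 k2 /\ lim_left k1 k2 (-1) (-1) /\
        lim_right k1 k2 (-6 * v - 1) (-2 * v - 1)) /\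
       (forall g1 g2 : R -> R,
          is_TW v g1 g2 -> lim_left g1 g2 (-1) (-1) -> ~ profile_const g1 g2 ->
          profile_translate g1 g2 h1 h2 \/ profile_translate g1 g2 k1 k2)) /\
   (forall g1 g2 : R -> R,
      is_TW 0 g1 g2 -> lim_left g1 g2 (-1) (-1) ->
      forall x, g1 x = -1 /\ g2 x = -1) /\
   (forall v : R, v > 0 -> forall g1 g2 : R -> R,
      is_TW v g1 g2 -> lim_left g1 g2 (-1) (-1) -> profile_const g1 g2))
  /\
  (* (B) *)
  ((forall v : R, v > 0 ->
     exists h1 h2 k1 k2 : R -> R,
       (is_TW v h1 h2 /\ lim_left h1 h2 (-2 * v + 1) (-6 * v + 1) /\
        lim_right h1 h2 1 1) /\
       (is_TW v k1 k2 /\ lim_left k1 k2 (-6 * v + 1) (-2 * v + 1) /\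
        lim_right k1 k2 1 1) /\
       (forall g1 g2 : R -> R,
          is_TW v g1 g2 -> lim_right g1 g2 1 1 -> ~ profile_const g1 g2 ->
          profile_translate g1 g2 h1 h2 \/ profile_translate g1 g2 k1 k2)) /\
   (forall g1 g2 : R -> R,
      is_TW 0 g1 g2 -> lim_right g1 g2 1 1 ->
      forall x, g1 x = 1 /\ g2 x = 1) /\
   (forall v : R, v < 0 -> forall g1 g2 : R -> R,
      is_TW v g1 g2 -> lim_right g1 g2 1 1 -> profile_const g1 g2)).
Proof.
  split; split; [| split | | split].
  - exact left_state_neg_speed.
  - exact left_state_zero_speed.
  - exact left_state_pos_speed.
  - exact right_state_pos_speed.
  - exact right_state_zero_speed.
  - exact right_state_neg_speed.
Qed.
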